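(* If $\mathcal{O}$ is a decomposable set of Scott-open modalities, then the open extension of the relation of applicative $\mathcal{O}$-bisimilarity is compatible.
   Context: Language: types $\tau ::= \mathbf{1} \mid \mathbf{N} \mid \tau \to \tau'$; signature $\Sigma$ of effect operations with arities $\alpha^n\to\alpha$, $\mathbf{N}\times\alpha^n\to\alpha$, $\alpha^{\mathbf{N}}\to\alpha$ or $\mathbf{N}\times\alpha^{\mathbf{N}}\to\alpha$. Values $V ::= * \mid Z \mid S(V) \mid \lambda x{:}\tau.M \mid x$; computations $M ::= VW \mid \mathbf{return}\,V \mid \mathbf{let}\ M\Rightarrow x\ \mathbf{in}\ N \mid \mathbf{fix}(V) \mid \mathbf{case}\ V\ \mathbf{of}\ \{Z\Rightarrow M; S(x)\Rightarrow N\} \mid \sigma(M_0,\dots) \mid \sigma(V;M_0,\dots) \mid \sigma(V)\mid\sigma(V;W)$, simply typed call-by-value. $\mathit{Val}(\tau)$, $\mathit{Com}(\tau)$: closed values/computations. Effect trees $TX$: possibly infinite trees with leaves $\bot$ or elements of $X$ and internal nodes labelled by effect operations (or $\sigma_m$, $m\in\mathbb{N}$) with $n$ or $\mathbb{N}$-many children according to arity; $t\le t'$ iff $t$ results from $t'$ by replacing subtrees with $\bot$. $\mu:TTX\to TX$ flattens trees of trees. Each $M\in\mathit{Com}(\tau)$ has an operational effect tree $|M|\in T(\mathit{Val}(\tau))$ from call-by-value evaluation. Modalities: set $\mathcal{O}$, $[\![o]\!]\subseteq T\mathbf{1}$; $t[\in P]$ replaces leaves in $P$ by $*$ and others by $\bot$;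 $o(A)=\{t\mid t[\in A]\in[\![o]\!]\}$. Scott-open: $[\![o]\!]$ upward closed, and if the supremum of an ascending chain lies in $[\![o]\!]$ then some chain element does. Decomposability: $\mathcal{T}$ is the least class containing $o(\top),o(\bot)$ closed under arbitrary $\bigvee,\bigwedge$, with $[\![o(\top)]\!]=o(\{*\})$, $[\![o(\bot)]\!]=o(\emptyset)$. $t\trianglelefteq t'$ iff $\forall\Phi\in\mathcal{T}$, $t\in[\![\Phi]\!]\Rightarrow t'\in[\![\Phi]\!]$; $r\preccurlyeq r'$ on $TT\mathbf{1}$ iff $\forall o\,\forall\Phi\in\mathcal{T}$, $r\in o([\![\Phi]\!])\Rightarrow r'\in o([\![\Phi]\!])$. $\mathcal{O}$ decomposable: $r\preccurlyeq r'\Rightarrow\mu r\trianglelefteq\mu r'$. Bisimilarity: $t\,\mathcal{O}(R)\,t'$ iff $\forall A\,\forall o$, $t\in o(A)\Rightarrow t'\in o(R[A])$, $R[A]=\{y\mid\exists x\in A,xRy\}$. An applicative $\mathcal{O}$-simulation is a family $R^v_\tau\subseteq\mathit{Val}(\tau)^2$, $R^c_\tau\subseteq\mathit{Com}(\tau)^2$ with (1) $V R^v_{\mathbf{N}}W\Rightarrow V=W$; (2) $MR^c_\tau N\Rightarrow|M|\,\mathcal{O}(R^v_\tau)\,|N|$; (3) $VR^v_{\tau'\to\tau}W\Rightarrow\forall U$, $VU\,R^c_\tau\,WU$. Applicative $\mathcal{O}$-bisimilarity is the largest symmetric applicative $\mathcal{O}$-simulation. Open extension / compatibility: $\Gamma\vdash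 M\,R^\circ\,N$ iff $M[\vec V/\vec x]\,R\,N[\vec V/\vec x]$ for all closed value instantiations of $\Gamma$; compatible means relating each variable to itself and closure under every term constructor. *)

From Stdlib Require Import List Arith ClassicalEpsilon.
Import ListNotations.

Set Implicit Arguments.

Inductive ty : Type :=
| One : ty
| Nat : ty
| Arr : ty -> ty -> ty.

Definition ctx := list ty.

(* Signatures of effect operations.  Arities:
     AFin n  : alpha^n -> alpha
     APFin n : N x alpha^n -> alpha
     AInf    : alpha^N -> alpha
     APInf   : N x alpha^N -> alpha                                       *)

Inductive arity : Type :=
| AFin : nat -> arity
| APFin : nat -> arity
| AInf : arity
| APInf : arity.

Record signature : Type := Signature {
  op :> Type;
  arity_of : op -> arity
}.
Arguments arity_of {_} _.

(* parameter carried by a node labelled sigma (sigma_m for parameterised ones) *)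
Definition par (a : arity) : Type :=
  match a with
  | AFin _ | AInf => unit
  | APFin _ | APInf => nat
  end.

(* index set of the children of a node *)
Definition chi (a : arity) : Type :=
  match a with
  | AFin n | APFin n => { i : nat | i < n }
  | AInf | APInf => nat
  end.

Section Language.
Variable Sg : signature.

(* Raw terms, de Bruijn indices (VVar 0 is the innermost bound variable). *)

Inductive val : Type :=
| VUnit : val
| VZ : val
| VS : val -> val
| VLam : ty -> com -> val            (* \x:tau. M  (M binds index 0) *)
| VVar : nat -> val
with com : Type :=
| CApp : val -> val -> com
| CRet : val -> com
| CLet : com -> com -> com           (* let M => x in N  (N binds index 0) *)
| CFix : val -> com
| CCase : val -> com -> com -> com   (* case V of {Z => M; S(x) => N} (N binds 0) *)
| COpF : Sg -> list com -> com
| COpPF : Sg -> val -> list com -> com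
| COpI : Sg -> val -> com
| COpPI : Sg -> val -> val -> com.

Inductive tv : ctx -> val -> ty -> Prop :=
| tv_var G n t : nth_error G n = Some t -> tv G (VVar n) t
| tv_unit G : tv G VUnit One
| tv_zero G : tv G VZ Nat
| tv_succ G v : tv G v Nat -> tv G (VS v) Nat
| tv_lam G t t' m : tc (t :: G) m t' -> tv G (VLam t m) (Arr t t')
with tc : ctx -> com -> ty -> Prop :=
| tc_app G v w t t' : tv G v (Arr t t') -> tv G w t -> tc G (CApp v w) t'
| tc_ret G v t : tv G v t -> tc G (CRet v) t
| tc_let G m n t t' : tc G m t -> tc (t :: G) n t' -> tc G (CLet m n) t'
| tc_fix G v r t : tv G v (Arr (Arr r t) (Arr r t)) -> tc G (CFix v) (Arr r t)
| tc_case G v m n t :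
    tv G v Nat -> tc G m t -> tc (Nat :: G) n t -> tc G (CCase v m n) t
| tc_opF G (s : Sg) ms n t :
    arity_of s = AFin n -> length ms = n -> (forall m, In m ms -> tc G m t) ->
    tc G (COpF s ms) t
| tc_opPF G (s : Sg) v ms n t :
    arity_of s = APFin n -> tv G v Nat -> length ms = n ->
    (forall m, In m ms -> tc G m t) -> tc G (COpPF s v ms) t
| tc_opI G (s : Sg) v t :
    arity_of s = AInf -> tv G v (Arr Nat t) -> tc G (COpI s v) t
| tc_opPI G (s : Sg) v w t :
    arity_of s = APInf -> tv G v Nat -> tv G w (Arr Nat t) -> tc G (COpPI s v w) t.

Definition upr (f : nat -> nat) : nat -> nat :=
  fun n => match n with 0 => 0 | S k => S (f k) end.

Fixpoint ren_v (f : nat -> nat) (v : val) : val :=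
  match v with
  | VUnit => VUnit
  | VZ => VZ
  | VS v => VS (ren_v f v)
  | VLam t m => VLam t (ren_c (upr f) m)
  | VVar n => VVar (f n)
  end
with ren_c (f : nat -> nat) (m : com) : com :=
  match m with
  | CApp v w => CApp (ren_v f v) (ren_v f w)
  | CRet v => CRet (ren_v f v)
  | CLet m n => CLet (ren_c f m) (ren_c (upr f) n)
  | CFix v => CFix (ren_v f v)
  | CCase v m n => CCase (ren_v f v) (ren_c f m) (ren_c (upr f) n)
  | COpF s ms => COpF s (map (ren_c f) ms)
  | COpPF s v ms => COpPF s (ren_v f v) (map (ren_c f) ms)
  | COpI s v => COpI s (ren_v f v)
  | COpPI s v w => COpPI s (ren_v f v) (ren_v f w)
  end.

Definition ups (g : nat -> val) : nat -> val :=
  fun n => match n with 0 => VVar 0 | S k => ren_v S (g k) end.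

Fixpoint subst_v (g : nat -> val) (v : val) : val :=
  match v with
  | VUnit => VUnit
  | VZ => VZ
  | VS v => VS (subst_v g v)
  | VLam t m => VLam t (subst_c (ups g) m)
  | VVar n => g n
  end
with subst_c (g : nat -> val) (m : com) : com :=
  match m with
  | CApp v w => CApp (subst_v g v) (subst_v g w)
  | CRet v => CRet (subst_v g v)
  | CLet m n => CLet (subst_c g m) (subst_c (ups g) n)
  | CFix v => CFix (subst_v g v)
  | CCase v m n => CCase (subst_v g v) (subst_c g m) (subst_c (ups g) n)
  | COpF s ms => COpF s (map (subst_c g) ms)
  | COpPF s v ms => COpPF s (subst_v g v) (map (subst_c g) ms)
  | COpI s v => COpI s (subst_v g v)
  | COpPI s v w => COpPI s (subst_v g v) (subst_v g w)
  end.

Definition scons (v : val) : nat -> val :=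
  fun n => match n with 0 => v | S k => VVar k end.
Definition subst1 (m : com) (v : val) : com := subst_c (scons v) m.

Fixpoint numeral (n : nat) : val :=
  match n with 0 => VZ | S k => VS (numeral k) end.

Fixpoint num_of (v : val) : option nat :=
  match v with
  | VZ => Some 0
  | VS v => match num_of v with Some k => Some (S k) | None => None end
  | _ => None
  end.

CoInductive tree (X : Type) : Type :=
| Bot : tree X
| Leaf : X -> tree X
| Node : forall s : Sg, par (arity_of s) -> (chi (arity_of s) -> tree X) -> tree X.
Arguments Bot {X}.

CoInductive tle {X : Type} : tree X -> tree X -> Prop :=
| tle_bot t : tle Bot t
| tle_leaf x : tle (Leaf x) (Leaf x)
| tle_node s p k k' :
    (forall i, tle (k i) (k' i)) -> tle (Node s p k) (Node s p k').

CoFixpoint mu {X : Type} (r : tree (tree X)) : tree X :=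
  match r with
  | Bot => Bot
  | Leaf t => t
  | Node s p k => Node s p (fun i => mu (k i))
  end.

CoFixpoint restrict {X : Type} (P : X -> Prop) (t : tree X) : tree unit :=
  match t with
  | Bot => Bot
  | Leaf x => if excluded_middle_informative (P x) then Leaf tt else Bot
  | Node s p k => Node s p (fun i => restrict P (k i))
  end.

(* Operational effect tree |M| via a stack machine *)

Definition config : Type := (list com * com)%type.  (* stack of continuations, term *)

Definition step (c : config) : option config :=
  let (stk, m) := c in
  match m with
  | CApp (VLam _ b) v => Some (stk, subst1 b v)
  | CRet v => match stk with
              | [] => None
              | n :: stk' => Some (stk', subst1 n v)
              end
  | CLet m n => Some (n :: stk, m)
  | CFix v =>
      (* fix(V) ~> V (\x:rho. let fix(V) => y in y x) *)
      match v with
      | VLam (Arr r _) _ =>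
          Some (stk, CApp v (VLam r (CLet (CFix (ren_v S v))
                                       (CApp (VVar 0) (VVar 1)))))
      | _ => None
      end
  | CCase VZ m _ => Some (stk, m)
  | CCase (VS v) _ n => Some (stk, subst1 n v)
  | _ => None
  end.

Definition terminal (c : config) : bool :=
  match c with
  | ([], CRet _) => true
  | (_, COpF _ _) | (_, COpPF _ _ _) | (_, COpI _ _) | (_, COpPI _ _ _) => true
  | _ => false
  end.

Fixpoint run (k : nat) (c : config) : option config :=
  if terminal c then Some c else
  match k with
  | 0 => None
  | S k' => match step c with Some c' => run k' c' | None => None end
  end.

Definition dflt : com := CRet VUnit.

CoFixpoint optree_cfg (c : config) : tree val :=
  match excluded_middle_informative (exists k, run k c <> None) with
  | right _ => Bot
  | left H =>
    match run (proj1_sig (constructive_indefinite_description _ H)) c with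
    | None => Bot
    | Some (stk, m) =>
      match m with
      | CRet v => Leaf v
      | COpF s ms =>
          match arity_of s as a return (arity_of s = a -> tree val) with
          | AFin n => fun e =>
              Node s (eq_rect_r par (tt : par (AFin n)) e)
                (fun i => optree_cfg
                   (stk, nth (proj1_sig (eq_rect _ chi i _ e : chi (AFin n))) ms dflt))
          | _ => fun _ => Bot
          end eq_refl
      | COpPF s v ms =>
          match num_of v with
          | None => Bot
          | Some p =>
          match arity_of s as a return (arity_of s = a -> tree val) with
          | APFin n => fun e =>
              Node s (eq_rect_r par (p : par (APFin n)) e)
                (fun i => optree_cfg
                   (stk, nth (proj1_sig (eq_rect _ chi i _ e : chi (APFin n))) ms dflt))
          | _ => fun _ => Bot
          end eq_refl
          end
      | COpI s v =>
          match arity_of s as a return (arity_of s = a -> tree val) with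
          | AInf => fun e =>
              Node s (eq_rect_r par (tt : par AInf) e)
                (fun i => optree_cfg
                   (stk, CApp v (numeral (eq_rect _ chi i _ e : chi AInf))))
          | _ => fun _ => Bot
          end eq_refl
      | COpPI s v w =>
          match num_of v with
          | None => Bot
          | Some p =>
          match arity_of s as a return (arity_of s = a -> tree val) with
          | APInf => fun e =>
              Node s (eq_rect_r par (p : par APInf) e)
                (fun i => optree_cfg
                   (stk, CApp w (numeral (eq_rect _ chi i _ e : chi APInf))))
          | _ => fun _ => Bot
          end eq_refl
          end
      | _ => Bot
      end
    end
  end.

Definition optree (m : com) : tree val := optree_cfg ([], m).

Section Modalities.
Variable O : Type.
Variable osem : O -> tree unit -> Prop.

Definition omod {X : Type} (o : O) (A : X -> Prop) : tree X -> Prop :=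
  fun t => osem o (restrict A t).

Definition is_sup (c : nat -> tree unit) (t : tree unit) : Prop :=
  (forall n, tle (c n) t) /\ (forall u, (forall n, tle (c n) u) -> tle t u).

Definition scott_open (P : tree unit -> Prop) : Prop :=
  (forall t t', tle t t' -> P t -> P t') /\
  (forall c : nat -> tree unit, (forall n, tle (c n) (c (S n))) ->
     forall t, is_sup c t -> P t -> exists n, P (c n)).

Inductive tform : Type :=
| FTop : O -> tform
| FBot : O -> tform
| FOr : forall I : Type, (I -> tform) -> tform
| FAnd : forall I : Type, (I -> tform) -> tform.

Fixpoint fsem (phi : tform) : tree unit -> Prop :=
  match phi with
  | FTop o => omod o (fun _ : unit => True)
  | FBot o => omod o (fun _ : unit => False)
  | FOr f => fun t => exists i, fsem (f i) t
  | FAnd f => fun t => forall i, fsem (f i) t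
  end.

Definition tri_le (t t' : tree unit) : Prop :=
  forall phi, fsem phi t -> fsem phi t'.

Definition curly_le (r r' : tree (tree unit)) : Prop :=
  forall o phi, omod o (fsem phi) r -> omod o (fsem phi) r'.

Definition decomposable : Prop :=
  forall r r', curly_le r r' -> tri_le (mu r) (mu r').

Definition image {X Y : Type} (R : X -> Y -> Prop) (A : X -> Prop) : Y -> Prop :=
  fun y => exists x, A x /\ R x y.

Definition lift {X : Type} (R : X -> X -> Prop) (t t' : tree X) : Prop :=
  forall (A : X -> Prop) o, omod o A t -> omod o (image R A) t'.

Definition app_sim (Rv : ty -> val -> val -> Prop) (Rc : ty -> com -> com -> Prop)
  : Prop :=
  (forall t v w, Rv t v w -> tv [] v t /\ tv [] w t) /\
  (forall t m n, Rc t m n -> tc [] m t /\ tc [] n t) /\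
  (forall v w, Rv Nat v w -> v = w) /\
  (forall t m n, Rc t m n -> lift (Rv t) (optree m) (optree n)) /\
  (forall t' t v w, Rv (Arr t' t) v w ->
     forall u, tv [] u t' -> Rc t (CApp v u) (CApp w u)).

Definition symmetric_fam (Rv : ty -> val -> val -> Prop) (Rc : ty -> com -> com -> Prop)
  : Prop :=
  (forall t v w, Rv t v w -> Rv t w v) /\ (forall t m n, Rc t m n -> Rc t n m).

Definition bisim_v (t : ty) (v w : val) : Prop :=
  exists Rv Rc, app_sim Rv Rc /\ symmetric_fam Rv Rc /\ Rv t v w.
Definition bisim_c (t : ty) (m n : com) : Prop :=
  exists Rv Rc, app_sim Rv Rc /\ symmetric_fam Rv Rc /\ Rc t m n.

End Modalities.

Definition closed_inst (G : ctx) (g : nat -> val) : Prop :=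
  forall i t, nth_error G i = Some t -> tv [] (g i) t.

Definition open_v (R : ty -> val -> val -> Prop) (G : ctx) (t : ty) (v w : val) : Prop :=
  tv G v t /\ tv G w t /\
  forall g, closed_inst G g -> R t (subst_v g v) (subst_v g w).

Definition open_c (R : ty -> com -> com -> Prop) (G : ctx) (t : ty) (m n : com) : Prop :=
  tc G m t /\ tc G n t /\
  forall g, closed_inst G g -> R t (subst_c g m) (subst_c g n).

Definition compatible (Rv : ctx -> ty -> val -> val -> Prop)
                      (Rc : ctx -> ty -> com -> com -> Prop) : Prop :=
  (forall G i t, nth_error G i = Some t -> Rv G t (VVar i) (VVar i)) /\
  (forall G, Rv G One VUnit VUnit) /\
  (forall G, Rv G Nat VZ VZ) /\
  (forall G v w, Rv G Nat v w -> Rv G Nat (VS v) (VS w)) /\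
  (forall G t t' m n, Rc (t :: G) t' m n -> Rv G (Arr t t') (VLam t m) (VLam t n)) /\
  (forall G t t' v v' w w', Rv G (Arr t t') v v' -> Rv G t w w' ->
      Rc G t' (CApp v w) (CApp v' w')) /\
  (forall G t v w, Rv G t v w -> Rc G t (CRet v) (CRet w)) /\
  (forall G t t' m m' n n', Rc G t m m' -> Rc (t :: G) t' n n' ->
      Rc G t' (CLet m n) (CLet m' n')) /\
  (forall G r t v w, Rv G (Arr (Arr r t) (Arr r t)) v w ->
      Rc G (Arr r t) (CFix v) (CFix w)) /\
  (forall G t v w m m' n n', Rv G Nat v w -> Rc G t m m' -> Rc (Nat :: G) t n n' ->
      Rc G t (CCase v m n) (CCase w m' n')) /\
  (forall G t (s : Sg) n ms ms', arity_of s = AFin n -> length ms = n ->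
      Forall2 (Rc G t) ms ms' -> Rc G t (COpF s ms) (COpF s ms')) /\
  (forall G t (s : Sg) n v w ms ms', arity_of s = APFin n -> Rv G Nat v w ->
      length ms = n -> Forall2 (Rc G t) ms ms' ->
      Rc G t (COpPF s v ms) (COpPF s w ms')) /\
  (forall G t (s : Sg) v w, arity_of s = AInf -> Rv G (Arr Nat t) v w ->
      Rc G t (COpI s v) (COpI s w)) /\
  (forall G t (s : Sg) v v' w w', arity_of s = APInf -> Rv G Nat v v' ->
      Rv G (Arr Nat t) w w' -> Rc G t (COpPI s v w) (COpPI s v' w')).

End Language.

(* Howe's method.  The Howe closure H of open bisimilarity is compatible by construction,
   contains open bisimilarity and is closed under substitution.  The heart of the proof is
   that closed H-related computations M, N have effect trees related by O(H).  By
   Scott-openness it suffices to show this for the finite approximations of |M|, by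
   induction on their depth; sequencing (let) and effect nodes are handled by
   decomposability, which makes the lifting O(-) commute with the flattening mu.  The
   transitive closure of closed H is then a symmetric applicative O-simulation (symmetry
   because open bisimilarity is symmetric and H is compatible), so H is contained in, hence
   equal to, open bisimilarity, which is therefore compatible. *)

From Stdlib Require Import List Lia Relations FunctionalExtensionality Eqdep ClassicalEpsilon.
Import ListNotations.

#[global] Arguments Leaf {Sg X} _.
#[global] Arguments Bot {Sg X}.

Lemma nth_forall_In {A} (P : A -> Prop) (l : list A) d :
  (forall i, i < length l -> P (nth i l d)) -> forall x, In x l -> P x.
Proof. intros H x Hx. destruct (In_nth _ _ d Hx) as [i [Hi <-]]. auto. Qed.

Lemma nth_map_fixed {A B} (f : A -> B) (l : list A) d d' i :
  f d = d' -> nth i (map f l) d' = f (nth i l d).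
Proof. intros <-. apply map_nth. Qed.

Lemma Forall2_nth_iff {A B} (R : A -> B -> Prop) l l' d d' :
  Forall2 R l l' <->
  length l = length l' /\ forall i, i < length l -> R (nth i l d) (nth i l' d').
Proof.
  split.
  - induction 1 as [|x y l l' Hxy _ [L IH]]; simpl; split; auto; [intros; lia|].
    intros [|i] Hi; auto. apply IH. lia.
  - revert l'. induction l as [|x l IH]; intros [|y l'] [L H]; simpl in *; try discriminate.
    + constructor.
    + constructor; [apply (H 0); lia|]. apply IH. split; [lia|]. intros i Hi. apply (H (S i)). lia.
Qed.

Lemma clos_trans_map {A B} {R : A -> A -> Prop} {R' : B -> B -> Prop} (f : A -> B) {x y} :
  (forall a b, R a b -> R' (f a) (f b)) -> clos_trans A R x y -> clos_trans B R' (f x) (f y).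
Proof. intros Hf. induction 1; [apply t_step | eapply t_trans]; eauto. Qed.

Lemma clos_trans_cong2 {A B C} {RA : A -> A -> Prop} {RB : B -> B -> Prop} {RC : C -> C -> Prop}
    (f : A -> B -> C) {a a' b b'} :
  (forall x y, RA x y -> RC (f x b) (f y b)) -> (forall x y, RB x y -> RC (f a' x) (f a' y)) ->
  clos_trans A RA a a' -> clos_trans B RB b b' -> clos_trans C RC (f a b) (f a' b').
Proof.
  intros H1 H2 Ha Hb. apply t_trans with (f a' b).
  - apply (clos_trans_map (R := RA) (fun x => f x b)); auto.
  - apply (clos_trans_map (R := RB) (f a')); auto.
Qed.

Lemma clos_trans_invariant {A} (R : A -> A -> Prop) (P : A -> Prop) x y :
  (forall a b, R a b -> P a -> P b) -> P x -> clos_trans A R x y ->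
  clos_trans A (fun a b => R a b /\ P a) x y /\ P y.
Proof.
  intros HP Hx H. revert Hx.
  induction H as [a b Hab|a b c _ IH1 _ IH2]; intros Ha.
  - split; [apply t_step|]; eauto.
  - destruct (IH1 Ha) as [H1 Hb]. destruct (IH2 Hb) as [H2 Hc]. split; [eapply t_trans|]; eauto.
Qed.

Lemma clos_trans_ends {A} (R : A -> A -> Prop) (P : A -> Prop) x y :
  (forall a b, R a b -> P a /\ P b) -> clos_trans A R x y -> P x /\ P y.
Proof. intros HR. induction 1 as [a b H|a b c _ [Ha _] _ [_ Hc]]; auto. Qed.

Lemma clos_trans_sym {A} (R : A -> A -> Prop) x y :
  (forall a b, R a b -> clos_trans A R b a) -> clos_trans A R x y -> clos_trans A R y x.
Proof. intros HR. induction 1; eauto using t_trans. Qed.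

Lemma clos_trans_Forall2 {A} (R : A -> A -> Prop) (P : A -> Prop) l l' :
  (forall x, P x -> R x x) -> Forall P l -> Forall P l' ->
  Forall2 (clos_trans A R) l l' -> clos_trans (list A) (Forall2 R) l l'.
Proof.
  intros HR Hl Hl' H. induction H as [|a b l l' Hab _ IH].
  - apply t_step. constructor.
  - inversion Hl as [|? ? Ha Hl0]; inversion Hl' as [|? ? Hb Hl0']; subst.
    apply t_trans with (b :: l).
    + apply (clos_trans_map (R := R) (fun x => x :: l)); [|exact Hab].
      intros x y Hxy. constructor; auto.
      clear -HR Hl0. induction Hl0; constructor; auto.
    + apply (clos_trans_map (R := Forall2 R) (cons b)); auto.
Qed.

(** * Substitution and typing *)

Section Syntax.
Context {Sg : signature}.
Local Notation val := (val Sg).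
Local Notation com := (com Sg).

Section ValComInd.
Variables (Pv : val -> Prop) (Pc : com -> Prop).
Hypotheses
  (h_unit : Pv (VUnit Sg)) (h_z : Pv (VZ Sg)) (h_s : forall v, Pv v -> Pv (VS v))
  (h_lam : forall t m, Pc m -> Pv (VLam t m)) (h_var : forall n, Pv (VVar Sg n))
  (h_app : forall v w, Pv v -> Pv w -> Pc (CApp v w))
  (h_ret : forall v, Pv v -> Pc (CRet v))
  (h_let : forall m n, Pc m -> Pc n -> Pc (CLet m n))
  (h_fix : forall v, Pv v -> Pc (CFix v))
  (h_case : forall v m n, Pv v -> Pc m -> Pc n -> Pc (CCase v m n))
  (h_opF : forall s ms, Forall Pc ms -> Pc (COpF s ms))
  (h_opPF : forall s v ms, Pv v -> Forall Pc ms -> Pc (COpPF s v ms))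
  (h_opI : forall s v, Pv v -> Pc (COpI s v))
  (h_opPI : forall s v w, Pv v -> Pv w -> Pc (COpPI s v w)).

Fixpoint val_ind' (v : val) : Pv v
with com_ind' (m : com) : Pc m.
Proof.
  - destruct v.
    + apply h_unit.
    + apply h_z.
    + apply h_s; apply val_ind'.
    + apply h_lam; apply com_ind'.
    + apply h_var.
  - destruct m.
    + apply h_app; apply val_ind'.
    + apply h_ret; apply val_ind'.
    + apply h_let; apply com_ind'.
    + apply h_fix; apply val_ind'.
    + apply h_case; [apply val_ind' | apply com_ind' | apply com_ind'].
    + apply h_opF. induction l; constructor; [apply com_ind' | assumption].
    + apply h_opPF; [apply val_ind' |]. induction l; constructor; [apply com_ind' | assumption].
    + apply h_opI; apply val_ind'.
    + apply h_opPI; apply val_ind'.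
Defined.

Lemma val_com_ind : (forall v, Pv v) /\ (forall m, Pc m).
Proof. exact (conj val_ind' com_ind'). Qed.
End ValComInd.

Local Ltac ext_up := apply functional_extensionality; intros [|k]; simpl; auto.

Local Ltac syn_congr up_tac :=
  simpl; f_equal; auto;
  try (match goal with H : _ |- _ => rewrite H; f_equal; ext_up; up_tac end);
  try ((try rewrite map_map); apply map_ext_Forall; eapply Forall_impl; [|eassumption]; simpl; auto).

Lemma ren_ren :
  (forall (v : val) f f', ren_v f (ren_v f' v) = ren_v (fun i => f (f' i)) v) /\
  (forall (m : com) f f', ren_c f (ren_c f' m) = ren_c (fun i => f (f' i)) m).
Proof. apply val_com_ind; intros; syn_congr idtac. Qed.

Lemma subst_ren :
  (forall (v : val) g f, subst_v g (ren_v f v) = subst_v (fun i => g (f i)) v) /\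
  (forall (m : com) g f, subst_c g (ren_c f m) = subst_c (fun i => g (f i)) m).
Proof. apply val_com_ind; intros; syn_congr idtac. Qed.

Lemma ren_subst :
  (forall (v : val) g f, ren_v f (subst_v g v) = subst_v (fun i => ren_v f (g i)) v) /\
  (forall (m : com) g f, ren_c f (subst_c g m) = subst_c (fun i => ren_v f (g i)) m).
Proof. apply val_com_ind; intros; syn_congr ltac:(rewrite !(proj1 ren_ren); reflexivity). Qed.

Lemma subst_subst :
  (forall (v : val) g g', subst_v g' (subst_v g v) = subst_v (fun i => subst_v g' (g i)) v) /\
  (forall (m : com) g g', subst_c g' (subst_c g m) = subst_c (fun i => subst_v g' (g i)) m).
Proof.
  apply val_com_ind; intros;
    syn_congr ltac:(rewrite (proj1 subst_ren), (proj1 ren_subst); reflexivity).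
Qed.

Lemma ren_as_subst :
  (forall (v : val) f, ren_v f v = subst_v (fun i => VVar Sg (f i)) v) /\
  (forall (m : com) f, ren_c f m = subst_c (fun i => VVar Sg (f i)) m).
Proof. apply val_com_ind; intros; syn_congr idtac. Qed.

Lemma subst_id : (forall v, subst_v (VVar Sg) v = v) /\ (forall m, subst_c (VVar Sg) m = m).
Proof.
  apply val_com_ind; intros; simpl; f_equal; auto;
    try (replace (ups (VVar Sg)) with (VVar Sg) by ext_up; auto);
    try (rewrite <- (map_id ms) at 2; apply map_ext_Forall; auto).
Qed.

Scheme tv_min := Minimality for tv Sort Prop
with tc_min := Minimality for tc Sort Prop.
Combined Scheme typing_ind from tv_min, tc_min.

Definition ctx_ren (G D : ctx) (f : nat -> nat) :=
  forall i t, nth_error G i = Some t -> nth_error D (f i) = Some t.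

Definition ctx_sub (G D : ctx) (g : nat -> val) :=
  forall i t, nth_error G i = Some t -> tv D (g i) t.

Lemma ctx_ren_up G D f t : ctx_ren G D f -> ctx_ren (t :: G) (t :: D) (upr f).
Proof. intros H [|i] u; simpl; auto. Qed.

Lemma In_map_typed (D : ctx) t (h : com -> com) ms :
  (forall m, In m ms -> tc D (h m) t) -> forall m, In m (map h ms) -> tc D m t.
Proof. intros H m Hm. apply in_map_iff in Hm as [m0 [<- Hm0]]. auto. Qed.

Lemma typing_ren :
  (forall G (v : val) t, tv G v t -> forall D f, ctx_ren G D f -> tv D (ren_v f v) t) /\
  (forall G (m : com) t, tc G m t -> forall D f, ctx_ren G D f -> tc D (ren_c f m) t).
Proof.
  apply typing_ind; intros; simpl;
    econstructor; eauto using ctx_ren_up; try (rewrite length_map; auto);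
    apply In_map_typed; eauto.
Qed.

Lemma ctx_sub_up G D g t : ctx_sub G D g -> ctx_sub (t :: G) (t :: D) (ups g).
Proof.
  intros H [|i] u; simpl; intros E.
  - injection E as <-. constructor. reflexivity.
  - eapply (proj1 typing_ren); eauto. intros j w Ej. exact Ej.
Qed.

Lemma typing_subst :
  (forall G (v : val) t, tv G v t -> forall D g, ctx_sub G D g -> tv D (subst_v g v) t) /\
  (forall G (m : com) t, tc G m t -> forall D g, ctx_sub G D g -> tc D (subst_c g m) t).
Proof.
  apply typing_ind; intros; simpl; eauto;
    econstructor; eauto using ctx_sub_up; try (rewrite length_map; auto);
    apply In_map_typed; eauto.
Qed.

Lemma subst_ext_typed :
  (forall G (v : val) t, tv G v t -> forall g g', (forall i, i < length G -> g i = g' i) ->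
     subst_v g v = subst_v g' v) /\
  (forall G (m : com) t, tc G m t -> forall g g', (forall i, i < length G -> g i = g' i) ->
     subst_c g m = subst_c g' m).
Proof.
  assert (Hup : forall (G : ctx) t (g g' : nat -> val), (forall i, i < length G -> g i = g' i) ->
     forall i, i < length (t :: G) -> ups g i = ups g' i).
  { intros G t g g' H [|i] Hi; simpl in *; auto. rewrite H; auto; lia. }
  apply typing_ind; intros; simpl.
  all: try (match goal with Hg : forall i, i < _ -> _ = _ |- _ =>
                apply Hg, nth_error_Some; congruence end).
  all: f_equal; eauto; apply map_ext_in; eauto.
Qed.

Lemma closed_subst_v (v : val) t g : tv [] v t -> subst_v g v = v.
Proof.
  intros H. rewrite <- (proj1 subst_id v) at 2.
  eapply (proj1 subst_ext_typed); eauto. simpl; intros; lia.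
Qed.

Lemma closed_subst_c (m : com) t g : tc [] m t -> subst_c g m = m.
Proof.
  intros H. rewrite <- (proj2 subst_id m) at 2.
  eapply (proj2 subst_ext_typed); eauto. simpl; intros; lia.
Qed.

Lemma typing_subst1 (m : com) u t t' : tc [t] m t' -> tv [] u t -> tc [] (subst1 m u) t'.
Proof.
  intros Hm Hu. eapply (proj2 typing_subst); eauto.
  intros [|[|i]] w E; simpl in *; try discriminate. congruence.
Qed.

Lemma numeral_typed G n : tv G (numeral Sg n) Nat.
Proof. induction n; simpl; constructor; auto. Qed.

End Syntax.

(** * Effect trees *)

Section Trees.
Context {Sg : signature}.
Local Notation tree := (tree Sg).

Definition tree_frob {X} (t : tree X) : tree X :=
  match t with Bot => Bot | Leaf x => Leaf x | Node s p k => Node s p k end.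

Lemma tree_frob_eq {X} (t : tree X) : t = tree_frob t.
Proof. destruct t; reflexivity. Qed.

CoFixpoint tmap {X Y} (f : X -> Y) (t : tree X) : tree Y :=
  match t with
  | Bot => Bot
  | Leaf x => Leaf (f x)
  | Node s p k => Node s p (fun i => tmap f (k i))
  end.

Definition bind {X Y} (t : tree X) (f : X -> tree Y) : tree Y := mu (tmap f t).

Lemma tmap_bot {X Y} (f : X -> Y) : tmap f Bot = Bot.
Proof. rewrite (tree_frob_eq (tmap _ _)); reflexivity. Qed.
Lemma tmap_leaf {X Y} (f : X -> Y) x : tmap f (Leaf x) = Leaf (f x).
Proof. rewrite (tree_frob_eq (tmap _ _)); reflexivity. Qed.
Lemma tmap_node {X Y} (f : X -> Y) (s : Sg) p k :
  tmap f (Node s p k) = Node s p (fun i => tmap f (k i)).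
Proof. rewrite (tree_frob_eq (tmap _ _)); reflexivity. Qed.

Lemma mu_bot {X} : mu (@Bot Sg (tree X)) = Bot.
Proof. rewrite (tree_frob_eq (mu _)); reflexivity. Qed.
Lemma mu_leaf {X} (t : tree X) : mu (Leaf t) = t.
Proof. rewrite (tree_frob_eq (mu _)); simpl. symmetry; apply tree_frob_eq. Qed.
Lemma mu_node {X} (s : Sg) p (k : _ -> tree (tree X)) :
  mu (Node s p k) = Node s p (fun i => mu (k i)).
Proof. rewrite (tree_frob_eq (mu _)); reflexivity. Qed.

Lemma restrict_bot {X} (P : X -> Prop) : restrict P (@Bot Sg X) = Bot.
Proof. rewrite (tree_frob_eq (restrict _ _)); reflexivity. Qed.
Lemma restrict_leaf {X} (P : X -> Prop) x :
  restrict P (@Leaf Sg X x) = if excluded_middle_informative (P x) then Leaf tt else Bot.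
Proof.
  rewrite (tree_frob_eq (restrict _ _)); simpl.
  destruct excluded_middle_informative; reflexivity.
Qed.
Lemma restrict_node {X} (P : X -> Prop) (s : Sg) p k :
  restrict P (Node s p k) = Node s p (fun i => restrict P (k i)).
Proof. rewrite (tree_frob_eq (restrict _ _)); reflexivity. Qed.

Lemma bind_bot {X Y} (f : X -> tree Y) : bind Bot f = Bot.
Proof. unfold bind. rewrite tmap_bot, mu_bot. reflexivity. Qed.
Lemma bind_leaf {X Y} (f : X -> tree Y) x : bind (Leaf x) f = f x.
Proof. unfold bind. rewrite tmap_leaf, mu_leaf. reflexivity. Qed.
Lemma bind_node {X Y} (f : X -> tree Y) (s : Sg) p k :
  bind (Node s p k) f = Node s p (fun i => bind (k i) f).
Proof. unfold bind. rewrite tmap_node, mu_node. reflexivity. Qed.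

Lemma node_inj {X} (s : Sg) p p' (k k' : chi (arity_of s) -> tree X) :
  Node s p k = Node s p' k' -> k = k'.
Proof. intros H. injection H as _ H. exact (inj_pair2 _ _ _ _ _ H). Qed.

Definition tle_step {X} (S : tree X -> tree X -> Prop) (t t' : tree X) : Prop :=
  match t with
  | Bot => True
  | Leaf x => t' = Leaf x
  | Node s p k => exists k', t' = Node s p k' /\ forall i, S (k i) (k' i) \/ tle (k i) (k' i)
  end.

Lemma tle_coind {X} (S : tree X -> tree X -> Prop) :
  (forall t t', S t t' -> tle_step S t t') -> forall t t', S t t' -> tle t t'.
Proof.
  intros H. cofix CH. intros t t' Hs. specialize (H _ _ Hs) as Hst.
  destruct t as [|x|s p k]; simpl in Hst.
  - constructor.
  - subst. constructor.
  - destruct Hst as [k' [-> Hk]]. constructor. intros i.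
    destruct (Hk i) as [Hi|Hi]; [apply CH; exact Hi | exact Hi].
Qed.

Lemma tle_leaf_inv {X} (x : X) (t' : tree X) : tle (Leaf x) t' -> t' = Leaf x.
Proof. intros H. inversion H; reflexivity. Qed.

Lemma tle_node_inv {X} (s : Sg) p (k : _ -> tree X) t' : tle (Node s p k) t' ->
  exists k', t' = Node s p k' /\ forall i, tle (k i) (k' i).
Proof.
  intros H. inversion H; subst.
  repeat match goal with HH : existT _ _ _ = existT _ _ _ |- _ => apply inj_pair2 in HH end.
  subst; eauto.
Qed.

Lemma tle_refl {X} (t : tree X) : tle t t.
Proof. revert t. cofix CH. intros [|x|s p k]; constructor; auto. Qed.

Lemma tle_trans {X} (a b c : tree X) : tle a b -> tle b c -> tle a c.
Proof.
  intros H1 H2. apply (tle_coind (fun a c => exists b, tle a b /\ tle b c)); [|eauto].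
  clear. intros a c [b [H1 H2]]. destruct a as [|x|s p k]; simpl; auto.
  - apply tle_leaf_inv in H1 as ->. apply tle_leaf_inv in H2; auto.
  - apply tle_node_inv in H1 as [k1 [-> Hk1]]. apply tle_node_inv in H2 as [k2 [-> Hk2]].
    exists k2; split; auto. intros i; left; eauto.
Qed.

CoInductive trel {X Y} (Q : X -> Y -> Prop) : tree X -> tree Y -> Prop :=
| trel_bot t : trel Q Bot t
| trel_leaf x y : Q x y -> trel Q (Leaf x) (Leaf y)
| trel_node s p k k' : (forall i, trel Q (k i) (k' i)) -> trel Q (Node s p k) (Node s p k').

Definition trel_step {X Y} (Q : X -> Y -> Prop) (S : tree X -> tree Y -> Prop)
    (t : tree X) (t' : tree Y) : Prop :=
  match t with
  | Bot => True
  | Leaf x => exists y, t' = Leaf y /\ Q x y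
  | Node s p k => exists k', t' = Node s p k' /\ forall i, S (k i) (k' i) \/ trel Q (k i) (k' i)
  end.

Lemma trel_coind {X Y} (Q : X -> Y -> Prop) (S : tree X -> tree Y -> Prop) :
  (forall t t', S t t' -> trel_step Q S t t') -> forall t t', S t t' -> trel Q t t'.
Proof.
  intros H. cofix CH. intros t t' Hs. specialize (H _ _ Hs) as Hst.
  destruct t as [|x|s p k]; simpl in Hst.
  - constructor.
  - destruct Hst as [y [-> Hq]]. constructor; auto.
  - destruct Hst as [k' [-> Hk]]. constructor. intros i.
    destruct (Hk i) as [Hi|Hi]; [apply CH; exact Hi | exact Hi].
Qed.

Lemma trel_eq_refl {X} (t : tree X) : trel eq t t.
Proof. revert t. cofix CH. intros [|x|s p k]; constructor; auto. Qed.

Lemma trel_restrict {X Y} (Q : X -> Y -> Prop) (A : X -> Prop) (B : Y -> Prop) t t' :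
  (forall x y, Q x y -> A x -> B y) -> trel Q t t' -> tle (restrict A t) (restrict B t').
Proof.
  intros HQ H.
  apply (tle_coind (fun a b => exists t t', trel Q t t' /\ a = restrict A t /\ b = restrict B t'));
    [|eauto].
  clear t t' H. intros a b [t [t' [H [-> ->]]]].
  destruct H as [t0 | x y Hxy | s p k k' Hk].
  - rewrite restrict_bot; simpl; auto.
  - rewrite !restrict_leaf.
    do 2 (destruct excluded_middle_informative; simpl; auto). exfalso; eauto.
  - rewrite !restrict_node. simpl. eexists; split; [reflexivity|]. intros i; left; eauto.
Qed.

Lemma restrict_mono_pred {X} (P P' : X -> Prop) (t : tree X) :
  (forall x, P x -> P' x) -> tle (restrict P t) (restrict P' t).
Proof. intros H. apply trel_restrict with (Q := eq); [intros; subst; auto | apply trel_eq_refl]. Qed.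

Lemma tle_restrict {X} (P : X -> Prop) (t t' : tree X) :
  tle t t' -> tle (restrict P t) (restrict P t').
Proof.
  intros H.
  apply (tle_coind (fun a b => exists t t', tle t t' /\ a = restrict P t /\ b = restrict P t'));
    [|eauto].
  clear t t' H. intros a b [t [t' [H [-> ->]]]].
  destruct H as [t0 | x | s p k k' Hk].
  - rewrite restrict_bot; simpl; auto.
  - rewrite !restrict_leaf. destruct excluded_middle_informative; simpl; auto.
  - rewrite !restrict_node. simpl. eexists; split; [reflexivity|]. intros i; left; eauto.
Qed.

Definition tequiv {X} (t t' : tree X) : Prop := tle t t' /\ tle t' t.

Definition tequiv_step {X} (S : tree X -> tree X -> Prop) (t t' : tree X) : Prop :=
  match t with
  | Bot => t' = Bot
  | Leaf x => t' = Leaf x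
  | Node s p k => exists k', t' = Node s p k' /\ forall i, S (k i) (k' i)
  end.

Lemma tequiv_coind {X} (S : tree X -> tree X -> Prop) :
  (forall t t', S t t' -> tequiv_step S t t') -> forall t t', S t t' -> tequiv t t'.
Proof.
  intros H t t' Hs. split.
  - revert t t' Hs. apply tle_coind. intros t t' Hs.
    destruct t as [|x|s p k]; simpl; auto; apply H in Hs; simpl in Hs; auto.
    destruct Hs as [k' [-> Hk]]. eauto.
  - apply (tle_coind (fun a b => S b a)); [clear t t' Hs; intros a b Hs | exact Hs].
    apply H in Hs. destruct b as [|x|s p k]; simpl in Hs; subst; simpl; auto.
    destruct Hs as [k' [-> Hk]]. simpl. eauto.
Qed.

Lemma tequiv_step_refl {X} (S : tree X -> tree X -> Prop) (t : tree X) :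
  (forall u, S u u) -> tequiv_step S t t.
Proof. intros HS. destruct t; simpl; eauto. Qed.

Lemma restrict_restrict {X} (P : X -> Prop) (Q : unit -> Prop) (t : tree X) :
  tequiv (restrict Q (restrict P t)) (restrict (fun x => P x /\ Q tt) t).
Proof.
  apply (tequiv_coind (fun a b => exists t, a = restrict Q (restrict P t) /\
                                             b = restrict (fun x => P x /\ Q tt) t)); [|eauto].
  intros a b [[|x|s p k] [-> ->]].
  - rewrite !restrict_bot. reflexivity.
  - rewrite !restrict_leaf. destruct (excluded_middle_informative (P x)).
    + rewrite restrict_leaf.
      do 2 (destruct excluded_middle_informative; simpl; try tauto).
    + rewrite restrict_bot. destruct excluded_middle_informative; simpl; tauto.
  - rewrite !restrict_node. simpl. eauto.
Qed.

Lemma restrict_True (t : tree unit) : tequiv (restrict (fun _ => True) t) t.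
Proof.
  apply (tequiv_coind (fun a b => a = restrict (fun _ => True) b)); [|reflexivity].
  intros a [|[]|s p k] ->.
  - rewrite restrict_bot. reflexivity.
  - rewrite restrict_leaf. destruct excluded_middle_informative; simpl; tauto.
  - rewrite restrict_node. simpl. eauto.
Qed.

Lemma restrict_tmap {X Y} (P : Y -> Prop) (f : X -> Y) (t : tree X) :
  tequiv (restrict P (tmap f t)) (restrict (fun x => P (f x)) t).
Proof.
  apply (tequiv_coind (fun a b => exists t, a = restrict P (tmap f t) /\
                                             b = restrict (fun x => P (f x)) t)); [|eauto].
  intros a b [[|x|s p k] [-> ->]].
  - rewrite tmap_bot, !restrict_bot. reflexivity.
  - rewrite tmap_leaf, !restrict_leaf. destruct excluded_middle_informative; reflexivity.
  - rewrite tmap_node, !restrict_node. simpl. eauto.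
Qed.

Lemma restrict_mu {X} (P : X -> Prop) (r : tree (tree X)) :
  tequiv (restrict P (mu r)) (mu (tmap (restrict P) r)).
Proof.
  apply (tequiv_coind (fun a b => a = b \/
           exists r, a = restrict P (mu r) /\ b = mu (tmap (restrict P) r))); [|eauto].
  intros a b [<- | [[|t|s p k] [-> ->]]].
  - apply tequiv_step_refl. auto.
  - rewrite mu_bot, tmap_bot, mu_bot, restrict_bot. reflexivity.
  - rewrite tmap_leaf, !mu_leaf. apply tequiv_step_refl. auto.
  - rewrite mu_node, tmap_node, mu_node, restrict_node. simpl. eauto 10.
Qed.

Lemma bind_mono {X Y} (t t' : tree X) (f g : X -> tree Y) :
  tle t t' -> (forall x, tle (f x) (g x)) -> tle (bind t f) (bind t' g).
Proof.
  intros Ht Hfg.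
  apply (tle_coind (fun a b => exists t t', tle t t' /\ a = bind t f /\ b = bind t' g)); [|eauto].
  clear t t' Ht. intros a b [t [t' [H [-> ->]]]].
  destruct H as [t0 | x | s p k k' Hk].
  - rewrite bind_bot; simpl; auto.
  - rewrite !bind_leaf. specialize (Hfg x).
    destruct (f x) as [|y|s p k]; simpl; auto.
    + apply tle_leaf_inv in Hfg; auto.
    + apply tle_node_inv in Hfg as [k' [E Hk]]. eauto.
  - rewrite !bind_node. simpl. eexists; split; [reflexivity|]. intros i; left; eauto.
Qed.

Lemma mu_node_leaves {X} (s : Sg) p (k : _ -> tree X) :
  mu (Node s p (fun i => Leaf (k i))) = Node s p k.
Proof.
  rewrite mu_node. f_equal. apply functional_extensionality; intros i. apply mu_leaf.
Qed.

End Trees.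

(** * Operational effect trees and their approximations *)

Section OpSem.
Context {Sg : signature}.
Local Notation val := (val Sg).
Local Notation com := (com Sg).
Local Notation tree := (tree Sg).
Local Notation config := (config Sg).
Local Notation dflt := (dflt Sg).

(* The effect nodes built by [optree_cfg], generalized over the arity [a] of [s] (with
   [e : arity_of s = a]) so that case analysis on [a] is possible. *)
Definition node_opF (f : config -> tree val) stk (s : Sg) ms {a} (e : arity_of s = a) : tree val :=
  match a as a0 return (arity_of s = a0 -> tree val) with
  | AFin n => fun e => Node s (eq_rect_r par (tt : par (AFin n)) e)
       (fun i => f (stk, nth (proj1_sig (eq_rect _ chi i _ e : chi (AFin n))) ms dflt))
  | _ => fun _ => Bot end e.

Definition node_opPF (f : config -> tree val) stk (s : Sg) (p : nat) ms {a} (e : arity_of s = a)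
    : tree val :=
  match a as a0 return (arity_of s = a0 -> tree val) with
  | APFin n => fun e => Node s (eq_rect_r par (p : par (APFin n)) e)
       (fun i => f (stk, nth (proj1_sig (eq_rect _ chi i _ e : chi (APFin n))) ms dflt))
  | _ => fun _ => Bot end e.

Definition node_opI (f : config -> tree val) stk (s : Sg) v {a} (e : arity_of s = a) : tree val :=
  match a as a0 return (arity_of s = a0 -> tree val) with
  | AInf => fun e => Node s (eq_rect_r par (tt : par AInf) e)
       (fun i => f (stk, CApp v (numeral Sg (eq_rect _ chi i _ e : chi AInf))))
  | _ => fun _ => Bot end e.

Definition node_opPI (f : config -> tree val) stk (s : Sg) (p : nat) w {a} (e : arity_of s = a)
    : tree val :=
  match a as a0 return (arity_of s = a0 -> tree val) with
  | APInf => fun e => Node s (eq_rect_r par (p : par APInf) e)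
       (fun i => f (stk, CApp w (numeral Sg (eq_rect _ chi i _ e : chi APInf))))
  | _ => fun _ => Bot end e.

(* One unfolding of [optree_cfg] at a terminal configuration, recursive calls replaced by [f]. *)
Definition shape (f : config -> tree val) (cf : config) : tree val :=
  let (stk, m) := cf in
  match m with
  | CRet v => Leaf v
  | COpF s ms => node_opF f stk s ms eq_refl
  | COpPF s v ms =>
      match num_of v with None => Bot | Some p => node_opPF f stk s p ms eq_refl end
  | COpI s v => node_opI f stk s v eq_refl
  | COpPI s v w =>
      match num_of v with None => Bot | Some p => node_opPI f stk s p w eq_refl end
  | _ => Bot
  end.

Definition optree_body (c : config) : tree val :=
  match excluded_middle_informative (exists k, run k c <> None) with
  | right _ => Bot
  | left H =>
    match run (proj1_sig (constructive_indefinite_description _ H)) c with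
    | None => Bot
    | Some cf => shape (@optree_cfg Sg) cf
    end
  end.

Lemma optree_unfold c : optree_cfg c = optree_body c.
Proof. rewrite (tree_frob_eq (optree_cfg c)), (tree_frob_eq (optree_body c)). reflexivity. Qed.

Lemma shape_ret f stk v : shape f (stk, CRet v) = Leaf v.
Proof. reflexivity. Qed.
Lemma shape_opF f stk s ms : shape f (stk, COpF s ms) = node_opF f stk s ms eq_refl.
Proof. reflexivity. Qed.
Lemma shape_opPF f stk s v ms : shape f (stk, COpPF s v ms) =
  match num_of v with None => Bot | Some p => node_opPF f stk s p ms eq_refl end.
Proof. reflexivity. Qed.
Lemma shape_opI f stk s v : shape f (stk, COpI s v) = node_opI f stk s v eq_refl.
Proof. reflexivity. Qed.
Lemma shape_opPI f stk s v w : shape f (stk, COpPI s v w) =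
  match num_of v with None => Bot | Some p => node_opPI f stk s p w eq_refl end.
Proof. reflexivity. Qed.

Lemma node_opF_cases s {a} (e : arity_of s = a) :
  (forall f stk ms, node_opF f stk s ms e = Bot) \/
  exists n p (idx : chi (arity_of s) -> nat), a = AFin n /\ (forall i, idx i < n) /\
    forall f stk ms, node_opF f stk s ms e = Node s p (fun i => f (stk, nth (idx i) ms dflt)).
Proof.
  destruct a; try (left; reflexivity). right.
  exists n, (eq_rect_r par (tt : par (AFin n)) e), (fun i => proj1_sig (eq_rect _ chi i _ e)).
  split; [reflexivity | split; [intros i; apply proj2_sig | reflexivity]].
Qed.

Lemma node_opPF_cases s p {a} (e : arity_of s = a) :
  (forall f stk ms, node_opPF f stk s p ms e = Bot) \/
  exists n p' (idx : chi (arity_of s) -> nat), a = APFin n /\ (forall i, idx i < n) /\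
    forall f stk ms, node_opPF f stk s p ms e = Node s p' (fun i => f (stk, nth (idx i) ms dflt)).
Proof.
  destruct a; try (left; reflexivity). right.
  exists n, (eq_rect_r par (p : par (APFin n)) e), (fun i => proj1_sig (eq_rect _ chi i _ e)).
  split; [reflexivity | split; [intros i; apply proj2_sig | reflexivity]].
Qed.

Lemma node_opI_cases s {a} (e : arity_of s = a) :
  (forall f stk v, node_opI f stk s v e = Bot) \/
  exists p (idx : chi (arity_of s) -> nat), a = AInf /\
    forall f stk v, node_opI f stk s v e = Node s p (fun i => f (stk, CApp v (numeral Sg (idx i)))).
Proof.
  destruct a; try (left; reflexivity). right.
  exists (eq_rect_r par (tt : par AInf) e), (fun i => eq_rect _ chi i _ e : chi AInf).
  split; reflexivity.
Qed.

Lemma node_opPI_cases s p {a} (e : arity_of s = a) :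
  (forall f stk w, node_opPI f stk s p w e = Bot) \/
  exists p' (idx : chi (arity_of s) -> nat), a = APInf /\
    forall f stk w, node_opPI f stk s p w e = Node s p' (fun i => f (stk, CApp w (numeral Sg (idx i)))).
Proof.
  destruct a; try (left; reflexivity). right.
  exists (eq_rect_r par (p : par APInf) e), (fun i => eq_rect _ chi i _ e : chi APInf).
  split; reflexivity.
Qed.

Lemma shape_cases (m : com) :
  (forall f stk, shape f (stk, m) = Bot) \/ (exists v, m = CRet v) \/
  exists (s : Sg) p (ch : chi (arity_of s) -> com),
    (forall f stk, shape f (stk, m) = Node s p (fun i => f (stk, ch i))) /\
    (forall sigma, tc [] m sigma -> forall i, tc [] (ch i) sigma).
Proof.
  destruct m as [v w|v|m n|v|v m n|s ms|s v ms|s v|s v w]; try (left; reflexivity).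
  - right; left; eauto.
  - destruct (node_opF_cases s eq_refl) as [H|[n [p [idx [E [Hi H]]]]]]; [left; intros; apply H|].
    right; right. exists s, p, (fun i => nth (idx i) ms dflt). split; [intros; apply H|].
    intros sigma Ht i. inversion Ht as [| | | | |? ? ? n' ? Ea L Hms| | |]; subst.
    apply Hms, nth_In. rewrite E in Ea. injection Ea as <-. apply Hi.
  - destruct (num_of v) as [p|] eqn:Ev; [|left; intros; rewrite shape_opPF, Ev; reflexivity].
    destruct (node_opPF_cases s p eq_refl) as [H|[n [p' [idx [E [Hi H]]]]]];
      [left; intros; rewrite shape_opPF, Ev; apply H|].
    right; right. exists s, p', (fun i => nth (idx i) ms dflt).
    split; [intros; rewrite shape_opPF, Ev; apply H|].
    intros sigma Ht i. inversion Ht as [| | | | | |? ? ? ? n' ? Ea _ L Hms| |]; subst.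
    apply Hms, nth_In. rewrite E in Ea. injection Ea as <-. apply Hi.
  - destruct (node_opI_cases s eq_refl) as [H|[p [idx [E H]]]]; [left; intros; apply H|].
    right; right. exists s, p, (fun i => CApp v (numeral Sg (idx i))). split; [intros; apply H|].
    intros sigma Ht i. inversion Ht; subst. econstructor; eauto using numeral_typed.
  - destruct (num_of v) as [p|] eqn:Ev; [|left; intros; rewrite shape_opPI, Ev; reflexivity].
    destruct (node_opPI_cases s p eq_refl) as [H|[p' [idx [E H]]]];
      [left; intros; rewrite shape_opPI, Ev; apply H|].
    right; right. exists s, p', (fun i => CApp w (numeral Sg (idx i))).
    split; [intros; rewrite shape_opPI, Ev; apply H|].
    intros sigma Ht i. inversion Ht; subst. econstructor; eauto using numeral_typed.
Qed.

Lemma run_terminal k (c cf : config) : run k c = Some cf -> terminal cf = true.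
Proof.
  revert c; induction k; intros c; simpl; destruct (terminal c) eqn:T; intros H;
    try (injection H as <-; exact T); try discriminate.
  destruct (step c); [eauto | discriminate].
Qed.

Lemma run_mono k j (c cf : config) : run k c = Some cf -> run (k + j) c = Some cf.
Proof.
  revert c; induction k; intros c H.
  - simpl in H. destruct (terminal c) eqn:T; [injection H as <- | discriminate].
    destruct j; simpl; rewrite T; reflexivity.
  - simpl in H |- *. destruct (terminal c); auto.
    destruct (step c); [eauto | discriminate].
Qed.

Lemma run_det k k' (c a b : config) : run k c = Some a -> run k' c = Some b -> a = b.
Proof.
  intros H1 H2. apply (run_mono _ (k' - k)) in H1. apply (run_mono _ (k - k')) in H2.
  replace (k' + (k - k')) with (k + (k' - k)) in H2 by lia. congruence.
Qed.

Lemma run_S_step k (c c' : config) :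
  terminal c = false -> step c = Some c' -> run (S k) c = run k c'.
Proof. intros T E. simpl. rewrite T, E. reflexivity. Qed.

Inductive star : config -> config -> Prop :=
| star_refl c : star c c
| star_step c c' c'' : terminal c = false -> step c = Some c' -> star c' c'' -> star c c''.

Lemma run_star k (c cf : config) : run k c = Some cf -> star c cf.
Proof.
  revert c; induction k; intros c; simpl; destruct (terminal c) eqn:T; intros H;
    try (injection H as <-; constructor); try discriminate.
  destruct (step c) eqn:E; [econstructor; eauto | discriminate].
Qed.

Lemma optree_run k (c cf : config) : run k c = Some cf -> optree_cfg c = shape (@optree_cfg Sg) cf.
Proof.
  intros Hk. rewrite optree_unfold. unfold optree_body.
  destruct excluded_middle_informative as [H|H]; [|exfalso; apply H; exists k; congruence].
  destruct constructive_indefinite_description as [k0 H0]. simpl.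
  destruct (run k0 c) eqn:E; [|contradiction].
  rewrite (run_det _ _ _ _ _ E Hk). reflexivity.
Qed.

Lemma optree_diverge (c : config) : (forall k, run k c = None) -> optree_cfg c = Bot.
Proof.
  intros Hk. rewrite optree_unfold. unfold optree_body.
  destruct excluded_middle_informative as [[k H]|H]; [exfalso; apply H, Hk | reflexivity].
Qed.

Lemma run_or_optree_bot (c : config) : (exists k cf, run k c = Some cf) \/ optree_cfg c = Bot.
Proof.
  destruct (classic (exists k cf, run k c = Some cf)) as [H|H]; [left; exact H | right].
  apply optree_diverge. intros k. destruct (run k c) eqn:R; [exfalso; eauto | reflexivity].
Qed.

Lemma optree_step (c c' : config) : terminal c = false -> step c = Some c' ->
  optree_cfg c = optree_cfg c'.
Proof.
  intros T E. destruct (classic (exists k cf, run k c' = Some cf)) as [[k [cf H]]|H].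
  - rewrite (optree_run _ _ _ H). apply optree_run with (k := S k). rewrite (run_S_step _ _ c'); auto.
  - rewrite !optree_diverge; auto; intros k.
    + destruct (run k c') eqn:R; [exfalso; eauto | reflexivity].
    + destruct k as [|k]; simpl; rewrite T; auto. rewrite E.
      destruct (run k c') eqn:R; [exfalso; eauto | reflexivity].
Qed.

Lemma optree_star (c c' : config) : star c c' -> optree_cfg c = optree_cfg c'.
Proof. induction 1 as [|c c' c'' T E _ IH]; auto. rewrite (optree_step _ _ T E). exact IH. Qed.

Lemma optree_terminal (c : config) : terminal c = true -> optree_cfg c = shape (@optree_cfg Sg) c.
Proof. intros T. apply optree_run with (k := 0). simpl. rewrite T. reflexivity. Qed.

Fixpoint approx (n : nat) (c : config) : tree val :=
  match n with
  | 0 => Bot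
  | S n' => if terminal c then shape (approx n') c else
            match step c with Some c' => approx n' c' | None => Bot end
  end.

Lemma approx_S_step n (c c' : config) : terminal c = false -> step c = Some c' ->
  approx (S n) c = approx n c'.
Proof. intros T E. simpl. rewrite T, E. reflexivity. Qed.

Lemma approx_S_stuck n (c : config) : terminal c = false -> step c = None -> approx (S n) c = Bot.
Proof. intros T E. simpl. rewrite T, E. reflexivity. Qed.

Lemma approx_S_terminal n (c : config) : terminal c = true -> approx (S n) c = shape (approx n) c.
Proof. intros T. simpl. rewrite T. reflexivity. Qed.

Lemma approx_star (c c' : config) : star c c' -> exists j, forall n, approx (j + n) c = approx n c'.
Proof.
  induction 1 as [|c c' c'' T E _ [j Hj]]; [exists 0; auto|].
  exists (S j). intros n. simpl. rewrite T, E. auto.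
Qed.

Lemma shape_mono (f g : config -> tree val) cf :
  (forall c, tle (f c) (g c)) -> tle (shape f cf) (shape g cf).
Proof.
  intros H. destruct cf as [stk m].
  destruct (shape_cases m) as [E|[[v ->]|[s [p [ch [E _]]]]]].
  - rewrite E. constructor.
  - apply tle_refl.
  - rewrite !E. constructor. auto.
Qed.

Lemma approx_le_S n (c : config) : tle (approx n c) (approx (S n) c).
Proof.
  revert c; induction n; intros c; [constructor|].
  cbn [approx]. destruct (terminal c).
  - apply shape_mono; auto.
  - destruct (step c); [auto | constructor].
Qed.

Lemma approx_mono n m (c : config) : n <= m -> tle (approx n c) (approx m c).
Proof. induction 1; [apply tle_refl|]. eapply tle_trans; eauto. apply approx_le_S. Qed.

Lemma approx_le_optree n (c : config) : tle (approx n c) (optree_cfg c).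
Proof.
  revert c; induction n; intros c; [constructor|]. simpl.
  destruct (terminal c) eqn:T.
  - rewrite (optree_terminal _ T). apply shape_mono; auto.
  - destruct (step c) eqn:E; [|constructor]. rewrite (optree_step _ _ T E). auto.
Qed.

Lemma approx_sup (A : val -> Prop) (c : config) (u : tree unit) :
  (forall n, tle (restrict A (approx n c)) u) -> tle (restrict A (optree_cfg c)) u.
Proof.
  intros H.
  apply (tle_coind (fun a u => exists c, a = restrict A (optree_cfg c) /\
                        forall n, tle (restrict A (approx n c)) u)); [|eauto].
  clear c u H. intros a u [c [-> H]].
  destruct (run_or_optree_bot c) as [[k [[stk m] Hk]]|Hbot]; [|rewrite Hbot, restrict_bot; exact I].
  rewrite (optree_run _ _ _ Hk).
  destruct (approx_star _ _ (run_star _ _ _ Hk)) as [j Hj].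
  assert (Ha : forall n, approx (j + S n) c = shape (approx n) (stk, m)).
  { intros n. rewrite Hj. apply approx_S_terminal, (run_terminal _ _ _ Hk). }
  destruct (shape_cases m) as [E|[[v ->]|[s [p [ch [E _]]]]]].
  - rewrite E, restrict_bot. exact I.
  - specialize (H (j + 1)). rewrite Ha in H. rewrite shape_ret, restrict_leaf in *.
    destruct excluded_middle_informative; [apply tle_leaf_inv in H|]; simpl; auto.
  - rewrite E, restrict_node. simpl.
    pose proof (H (j + 1)) as Hnode. rewrite Ha, E, restrict_node in Hnode.
    apply tle_node_inv in Hnode as [k' [-> _]]. exists k'. split; auto.
    intros i; left. exists (stk, ch i). split; auto.
    intros n. specialize (H (j + S n)). rewrite Ha, E, restrict_node in H.
    apply tle_node_inv in H as [k'' [E' Hk'']].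
    apply node_inj in E'. subst. auto.
Qed.

Lemma step_app (stk stk2 : list com) (M : com) : terminal (stk, M) = false ->
  terminal (stk ++ stk2, M) = false /\
  step (stk ++ stk2, M) = option_map (fun c => (fst c ++ stk2, snd c)) (step (stk, M)).
Proof.
  intros T. destruct M; destruct stk; simpl in *; try discriminate; split; auto;
    repeat (match goal with |- context [match ?x with _ => _ end] => destruct x end; simpl; auto).
Qed.

Lemma terminal_cases (stk : list com) (M : com) : terminal (stk, M) = true ->
  (exists v, M = CRet v /\ stk = []) \/ (forall stk', terminal (stk', M) = true).
Proof.
  intros T. destruct M; destruct stk; simpl in *; try discriminate;
    try (right; intros [|]; reflexivity). left; eauto.
Qed.

Lemma star_app (c c' : config) (stk2 : list com) : star c c' ->
  star (fst c ++ stk2, snd c) (fst c' ++ stk2, snd c').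
Proof.
  induction 1 as [|[stk M] c' c'' T E _ IH]; [constructor|].
  destruct (step_app stk stk2 M T) as [T2 S2].
  econstructor; [exact T2| |exact IH]. cbn [fst snd]. rewrite S2, E. reflexivity.
Qed.

Lemma approx_app n m (stk stk2 : list com) (M : com) : n <= m ->
  tle (approx n (stk ++ stk2, M)) (bind (approx n (stk, M)) (fun v => approx m (stk2, CRet v))).
Proof.
  revert stk M; induction n; intros stk M Hnm; [constructor|].
  destruct (terminal (stk, M)) eqn:T.
  - destruct (terminal_cases stk M T) as [[v [-> ->]]|Hall].
    + change (approx (S n) ([], CRet v)) with (@Leaf Sg _ v).
      rewrite bind_leaf. apply approx_mono, Hnm.
    + rewrite !approx_S_terminal by auto.
      destruct (shape_cases M) as [E|[[v ->]|[s [p [ch [E _]]]]]].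
      * rewrite !E. constructor.
      * discriminate (Hall [dflt]).
      * rewrite !E, bind_node. constructor. intros i. apply IHn. lia.
  - destruct (step_app stk stk2 M T) as [T2 S2]. cbn [approx]. rewrite T, T2, S2.
    destruct (step (stk, M)) as [[stk' M']|]; simpl.
    + apply IHn. lia.
    + constructor.
Qed.

Lemma approx_ret_le k (x : com) (v : val) :
  tle (approx k ([x], CRet v)) (approx k ([], subst1 x v)).
Proof.
  destruct k; [constructor|]. rewrite (approx_S_step k _ ([], subst1 x v)) by reflexivity.
  apply approx_le_S.
Qed.

Lemma optree_bind (stk stk2 : list com) (M : com) :
  tle (bind (optree_cfg (stk, M)) (fun v => optree_cfg (stk2, CRet v)))
      (optree_cfg (stk ++ stk2, M)).
Proof.
  apply (tle_coind (fun a b => exists stk M,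
           a = bind (optree_cfg (stk, M)) (fun v => optree_cfg (stk2, CRet v)) /\
           b = optree_cfg (stk ++ stk2, M))); [|eauto].
  clear stk M. intros a b [stk [M [-> ->]]].
  destruct (run_or_optree_bot (stk, M)) as [[k [[stk' M'] Hk]]|Hbot];
    [|rewrite Hbot, bind_bot; exact I].
  rewrite (optree_run _ _ _ Hk).
  pose proof (star_app _ _ stk2 (run_star _ _ _ Hk)) as Hs; cbn [fst snd] in Hs.
  rewrite (optree_star _ _ Hs).
  destruct (terminal_cases stk' M' (run_terminal _ _ _ Hk)) as [[v [-> ->]]|Hall].
  - rewrite shape_ret, bind_leaf. destruct (optree_cfg _); simpl; eauto.
    eexists; split; [reflexivity|]. intros; right; apply tle_refl.
  - rewrite (optree_terminal _ (Hall _)).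
    destruct (shape_cases M') as [E|[[v ->]|[s [p [ch [E _]]]]]].
    + rewrite E, bind_bot. exact I.
    + discriminate (Hall [dflt]).
    + rewrite !E, bind_node. simpl. eexists; split; [reflexivity|]. intros i; left; eauto.
Qed.

Inductive tstack : list com -> ty -> ty -> Prop :=
| ts_nil t : tstack [] t t
| ts_cons n stk t t' t'' : tc [t] n t' -> tstack stk t' t'' -> tstack (n :: stk) t t''.

Definition tcfg (c : config) (tau : ty) : Prop :=
  exists sigma, tc [] (snd c) sigma /\ tstack (fst c) sigma tau.

Lemma step_pres (c c' : config) tau : tcfg c tau -> step c = Some c' -> tcfg c' tau.
Proof.
  destruct c as [stk M]. intros [sigma [HM Hs]] E. simpl in *.
  destruct M; simpl in E; try discriminate.
  - destruct v; try discriminate. injection E as <-.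
    inversion HM as [? ? ? ? ? Hfun Harg| | | | | | | |]; subst. inversion Hfun; subst.
    exists sigma. split; auto. eapply typing_subst1; eauto.
  - destruct stk as [|n stk']; try discriminate. injection E as <-.
    inversion Hs; subst. inversion HM; subst.
    exists t'. split; auto. eapply typing_subst1; eauto.
  - injection E as <-. inversion HM; subst. exists t. split; auto. simpl. econstructor; eauto.
  - destruct v as [| | |t0 b|]; try discriminate. destruct t0 as [| |r t1]; try discriminate.
    injection E as <-. inversion HM as [| | |G v0 r0 t2 Hv| | | | |]; subst.
    inversion Hv; subst.
    assert (Hw : tv [r0] (ren_v S (VLam (Arr r0 t2) b)) (Arr (Arr r0 t2) (Arr r0 t2))).
    { eapply (proj1 typing_ren); eauto. intros [|i] u Hi; discriminate. }
    exists (Arr r0 t2). simpl. split; auto.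
    econstructor; eauto. constructor. econstructor.
    + constructor. exact Hw.
    + econstructor; constructor; reflexivity.
  - inversion HM as [| | | |? ? ? ? ? Hv Hm Hn| | | |]; subst.
    destruct v; try discriminate; injection E as <-.
    + exists sigma; split; auto.
    + exists sigma; split; auto. simpl. eapply typing_subst1; eauto.
      inversion Hv; subst; auto.
Qed.

Lemma star_pres (c c' : config) tau : star c c' -> tcfg c tau -> tcfg c' tau.
Proof. induction 1; auto. intros H2. apply IHstar. eapply step_pres; eauto. Qed.

Lemma optree_typed (c : config) tau : tcfg c tau ->
  trel (fun v w => v = w /\ tv [] v tau) (optree_cfg c) (optree_cfg c).
Proof.
  intros Hc.
  apply (trel_coind _ (fun a b => exists c, a = optree_cfg c /\ b = a /\ tcfg c tau)); [|eauto].
  clear c Hc. intros a b [c [-> [-> Hc]]].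
  destruct (run_or_optree_bot c) as [[k [[stk' M'] Hk]]|Hbot]; [|rewrite Hbot; exact I].
  rewrite (optree_run _ _ _ Hk).
  pose proof (star_pres _ _ _ (run_star _ _ _ Hk) Hc) as [sigma [HM Hs]]; simpl in HM, Hs.
  destruct (terminal_cases stk' M' (run_terminal _ _ _ Hk)) as [[v [-> ->]]|Hall].
  - exists v. inversion Hs; subst. inversion HM; subst. auto.
  - destruct (shape_cases M') as [E|[[v ->]|[s [p [ch [E Ht]]]]]].
    + rewrite E. exact I.
    + discriminate (Hall [dflt]).
    + rewrite E. simpl. eexists; split; [reflexivity|]. intros i. left.
      exists (stk', ch i). split; auto. split; auto. exists sigma. split; [apply Ht|]; auto.
Qed.

Lemma canon_arr (v : val) a b : tv [] v (Arr a b) -> exists m, v = VLam a m.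
Proof. intros H. inversion H as [? [|] ? E| | | |]; subst; eauto; discriminate. Qed.

End OpSem.

(** * Relational lifting and applicative bisimilarity *)

Section Bisimilarity.
Context {Sg : signature}.
Local Notation val := (val Sg).
Local Notation com := (com Sg).
Local Notation tree := (tree Sg).
Local Notation config := (config Sg).
Local Notation dflt := (dflt Sg).
Variable O : Type.
Variable osem : O -> tree unit -> Prop.
Hypothesis scott : forall o, scott_open (osem o).
Hypothesis decomp : decomposable osem.

Local Notation lift := (lift osem).

Lemma osem_up o t t' : tle t t' -> osem o t -> osem o t'.
Proof. apply (proj1 (scott o)). Qed.

Lemma omod_mono_pred {X} o (A B : X -> Prop) t :
  (forall x, A x -> B x) -> omod osem o A t -> omod osem o B t.
Proof. intros H. apply osem_up, restrict_mono_pred, H. Qed.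

Lemma lift_mono {X} (R R' : X -> X -> Prop) t t' :
  (forall x y, R x y -> R' x y) -> lift R t t' -> lift R' t t'.
Proof.
  intros HR H A o Ht. eapply omod_mono_pred; [|apply H; exact Ht].
  intros y [x [Hx Hxy]]. exists x; auto.
Qed.

Lemma lift_comp {X} (R R' : X -> X -> Prop) t1 t2 t3 :
  lift R t1 t2 -> lift R' t2 t3 -> lift (fun x z => exists y, R x y /\ R' y z) t1 t3.
Proof.
  intros H1 H2 A o Ht. eapply omod_mono_pred; [|apply H2, H1, Ht].
  intros z [y [[x [Hx Hxy]] Hyz]]. exists x; eauto.
Qed.

Lemma lift_trel {X} (Q R : X -> X -> Prop) t t' :
  trel Q t t' -> (forall x y, Q x y -> R x y) -> lift R t t'.
Proof.
  intros H HQ A o. apply osem_up, trel_restrict with (Q := Q); auto.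
  intros x y Hq Hx. exists x; auto.
Qed.

Lemma lift_bot {X} (R : X -> X -> Prop) t' : lift R Bot t'.
Proof. intros A o. apply osem_up. rewrite restrict_bot. constructor. Qed.

Lemma lift_tle_l {X} (R : X -> X -> Prop) a a' b : tle a' a -> lift R a b -> lift R a' b.
Proof. intros H1 H2 A o H. apply H2. revert H. apply osem_up, tle_restrict, H1. Qed.

Lemma lift_tle_r {X} (R : X -> X -> Prop) a b b' : tle b b' -> lift R a b -> lift R a b'.
Proof. intros H1 H2 A o H. apply H2 in H. revert H. apply osem_up, tle_restrict, H1. Qed.

Lemma fsem_lift {X} (R : X -> X -> Prop) t t' : lift R t t' ->
  forall phi A, fsem osem phi (restrict A t) -> fsem osem phi (restrict (image R A) t').
Proof.
  intros HL phi. induction phi as [o|o|I f IH|I f IH]; intros A H; simpl in *.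
  - unfold omod in *.
    assert (H1 : osem o (restrict A t)).
    { revert H. apply osem_up. eapply tle_trans; [apply (proj1 (restrict_restrict _ _ _))|].
      apply restrict_mono_pred. tauto. }
    apply HL in H1. revert H1. apply osem_up.
    eapply tle_trans; [|apply (proj2 (restrict_restrict (image R A) (fun _ => True) _))].
    apply restrict_mono_pred. tauto.
  - unfold omod in *.
    assert (H1 : osem o (restrict (fun x => A x /\ False) t)).
    { revert H. apply osem_up, (proj1 (restrict_restrict A (fun _ => False) t)). }
    apply HL in H1. revert H1. apply osem_up.
    eapply tle_trans; [|apply (proj2 (restrict_restrict (image R A) (fun _ => False) _))].
    apply restrict_mono_pred. intros y [x [[_ []] _]].
  - destruct H as [i Hi]. exists i. auto.
  - intros i. auto.
Qed.

(* The only direct use of decomposability. *)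
Lemma mu_lift {X} (R : X -> X -> Prop) (Q : tree X -> tree X -> Prop) r r' :
  (forall t t', Q t t' -> lift R t t') -> lift Q r r' -> lift R (mu r) (mu r').
Proof.
  intros HQ HL A o H.
  set (rr := tmap (restrict A) r). set (rr' := tmap (restrict (image R A)) r').
  assert (Hc : curly_le osem rr rr').
  { intros o' phi H1.
    assert (H2 : omod osem o' (fun t => fsem osem phi (restrict A t)) r).
    { revert H1. apply osem_up, (proj1 (restrict_tmap _ _ _)). }
    apply HL in H2. revert H2. apply osem_up.
    eapply tle_trans; [|apply (proj2 (restrict_tmap _ _ _))]. apply restrict_mono_pred.
    intros t' [t [Ht Htt']]. eapply fsem_lift; eauto. }
  specialize (decomp _ _ Hc (FTop o)). simpl in decomp. unfold omod in *.
  assert (H3 : osem o (restrict (fun _ => True) (mu rr'))).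
  { apply decomp. revert H. apply osem_up.
    eapply tle_trans; [apply (proj1 (restrict_mu _ _)) | apply (proj2 (restrict_True _))]. }
  revert H3. apply osem_up.
  eapply tle_trans; [apply (proj1 (restrict_True _)) | apply (proj2 (restrict_mu _ _))].
Qed.

Lemma bind_lift {X} (R1 R : X -> X -> Prop) t t' (f g : X -> tree X) :
  lift R1 t t' -> (forall x y, R1 x y -> lift R (f x) (g y)) -> lift R (bind t f) (bind t' g).
Proof.
  intros Ht Hfg. apply mu_lift with (Q := lift R); auto.
  intros A o H.
  assert (H1 : omod osem o (fun x => A (f x)) t) by (revert H; apply osem_up, (proj1 (restrict_tmap _ _ _))).
  apply Ht in H1. revert H1. apply osem_up.
  eapply tle_trans; [|apply (proj2 (restrict_tmap _ _ _))]. apply restrict_mono_pred.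
  intros y [x [Hx Hxy]]. exists (f x). auto.
Qed.

Lemma node_lift {X} (R : X -> X -> Prop) (s : Sg) p k k' :
  (forall i, lift R (k i) (k' i)) -> lift R (Node s p k) (Node s p k').
Proof.
  intros H. rewrite <- (mu_node_leaves s p k), <- (mu_node_leaves s p k').
  apply mu_lift with (Q := lift R); auto.
  apply lift_trel with (Q := lift R); auto.
  constructor. intros i. constructor. auto.
Qed.

Local Notation BV := (bisim_v osem).
Local Notation BC := (bisim_c osem).

Lemma bisim_coind (Rv : ty -> val -> val -> Prop) (Rc : ty -> com -> com -> Prop) :
  app_sim osem Rv Rc -> symmetric_fam Rv Rc ->
  (forall t v w, Rv t v w -> BV t v w) /\ (forall t m n, Rc t m n -> BC t m n).
Proof. intros HA HS. split; intros; exists Rv, Rc; auto. Qed.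

Lemma bisim_app_sim : app_sim osem BV BC.
Proof.
  split; [|split; [|split; [|split]]].
  - intros t v w [Rv [Rc [[H _] [_ Hr]]]]. eauto.
  - intros t m n [Rv [Rc [[_ [H _]] [_ Hr]]]]. eauto.
  - intros v w [Rv [Rc [[_ [_ [H _]]] [_ Hr]]]]. eauto.
  - intros t m n [Rv [Rc [HA [HS Hr]]]].
    eapply lift_mono; [|apply HA, Hr]. intros x y Hxy. exists Rv, Rc. auto.
  - intros t' t v w [Rv [Rc [HA [HS Hr]]]] u Hu. exists Rv, Rc. split; [|split]; auto.
    apply HA with (t' := t'); auto.
Qed.

Lemma bisim_symmetric : symmetric_fam BV BC.
Proof.
  split; intros t a b [Rv [Rc [HA [HS Hr]]]]; exists Rv, Rc; (split; [exact HA | split; [exact HS|]]);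
    [apply (proj1 HS) | apply (proj2 HS)]; exact Hr.
Qed.

Lemma bisim_v_typed t v w : BV t v w -> tv [] v t /\ tv [] w t.
Proof. apply bisim_app_sim. Qed.

Lemma bisim_c_typed t m n : BC t m n -> tc [] m t /\ tc [] n t.
Proof. apply bisim_app_sim. Qed.

Lemma bisim_nat v w : BV Nat v w -> v = w.
Proof. apply bisim_app_sim. Qed.

Lemma bisim_c_lift t m n : BC t m n -> lift (BV t) (optree m) (optree n).
Proof. apply bisim_app_sim. Qed.

Lemma bisim_app t' t v w u : BV (Arr t' t) v w -> tv [] u t' -> BC t (CApp v u) (CApp w u).
Proof. intros H Hu. exact (proj2 (proj2 (proj2 (proj2 bisim_app_sim))) _ _ _ _ H u Hu). Qed.

Lemma bisim_refl : (forall t v, tv [] v t -> BV t v v) /\ (forall t m, tc [] m t -> BC t m m).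
Proof.
  set (Rv := fun t (v w : val) => v = w /\ tv [] v t).
  set (Rc := fun t (m n : com) => m = n /\ tc [] m t).
  destruct (bisim_coind Rv Rc) as [Hv Hc].
  - split; [|split; [|split; [|split]]]; unfold Rv, Rc.
    + intros t v w [<- H]; auto.
    + intros t m n [<- H]; auto.
    + intros v w [<- H]; auto.
    + intros t m n [<- H]. apply lift_trel with (Q := fun v w => v = w /\ tv [] v t); auto.
      apply optree_typed. exists t. split; [exact H | constructor].
    + intros t' t v w [<- H] u Hu. split; auto. econstructor; eauto.
  - split; unfold Rv, Rc; intros t a b [<- H]; auto.
  - split; intros; [apply Hv | apply Hc]; split; auto.
Qed.

Lemma bisim_trans :
  (forall t a b c, BV t a b -> BV t b c -> BV t a c) /\
  (forall t a b c, BC t a b -> BC t b c -> BC t a c).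
Proof.
  set (Rv := fun t (a c : val) => exists b, BV t a b /\ BV t b c).
  set (Rc := fun t (a c : com) => exists b, BC t a b /\ BC t b c).
  destruct (bisim_coind Rv Rc) as [Hv Hc].
  - split; [|split; [|split; [|split]]]; unfold Rv, Rc.
    + intros t v w [b [H1 H2]]. split; [apply (bisim_v_typed _ _ _ H1) | apply (bisim_v_typed _ _ _ H2)].
    + intros t v w [b [H1 H2]]. split; [apply (bisim_c_typed _ _ _ H1) | apply (bisim_c_typed _ _ _ H2)].
    + intros v w [b [H1 H2]]. rewrite (bisim_nat _ _ H1). apply bisim_nat, H2.
    + intros t m n [b [H1 H2]]. apply lift_comp with (t2 := optree b); apply bisim_c_lift; assumption.
    + intros t' t v w [b [H1 H2]] u Hu. exists (CApp b u). split; eapply bisim_app; eauto.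
  - split; unfold Rv, Rc; intros t a c [b [H1 H2]]; exists b; split; apply bisim_symmetric; auto.
  - split; intros; [apply Hv | apply Hc]; unfold Rv, Rc; eauto.
Qed.

Local Notation OV := (open_v BV).
Local Notation OC := (open_c BC).

Lemma ctx_sub_closed_inst G D (g h : nat -> val) :
  ctx_sub G D g -> closed_inst D h -> closed_inst G (fun i => subst_v h (g i)).
Proof. intros Hg Hh i t Hi. eapply (proj1 typing_subst); eauto. Qed.

Lemma closed_inst_nil : closed_inst (Sg := Sg) [] (VVar Sg).
Proof. intros [|i] t H; discriminate. Qed.

Lemma open_v_refl G t (v : val) : tv G v t -> OV G t v v.
Proof.
  intros H. split; [|split]; auto. intros g Hg.
  apply bisim_refl. eapply (proj1 typing_subst); eauto.
Qed.

Lemma open_c_refl G t (m : com) : tc G m t -> OC G t m m.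
Proof.
  intros H. split; [|split]; auto. intros g Hg.
  apply bisim_refl. eapply (proj2 typing_subst); eauto.
Qed.

Lemma open_v_sym G t (v w : val) : OV G t v w -> OV G t w v.
Proof. intros [H1 [H2 H3]]. split; [|split]; auto. intros g Hg. apply bisim_symmetric; auto. Qed.

Lemma open_c_sym G t (m n : com) : OC G t m n -> OC G t n m.
Proof. intros [H1 [H2 H3]]. split; [|split]; auto. intros g Hg. apply bisim_symmetric; auto. Qed.

Lemma open_v_trans G t (a b c : val) : OV G t a b -> OV G t b c -> OV G t a c.
Proof.
  intros [H1 [H2 H3]] [H4 [H5 H6]]. split; [|split]; auto. intros g Hg.
  eapply bisim_trans; eauto.
Qed.

Lemma open_c_trans G t (a b c : com) : OC G t a b -> OC G t b c -> OC G t a c.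
Proof.
  intros [H1 [H2 H3]] [H4 [H5 H6]]. split; [|split]; auto. intros g Hg.
  eapply bisim_trans; eauto.
Qed.

Lemma open_v_subst G D t (v w : val) g : OV G t v w -> ctx_sub G D g ->
  OV D t (subst_v g v) (subst_v g w).
Proof.
  intros [H1 [H2 H3]] Hg. split; [|split]; try (eapply (proj1 typing_subst); eauto).
  intros h Hh. rewrite !(proj1 subst_subst). apply H3. eapply ctx_sub_closed_inst; eauto.
Qed.

Lemma open_c_subst G D t (m n : com) g : OC G t m n -> ctx_sub G D g ->
  OC D t (subst_c g m) (subst_c g n).
Proof.
  intros [H1 [H2 H3]] Hg. split; [|split]; try (eapply (proj2 typing_subst); eauto).
  intros h Hh. rewrite !(proj2 subst_subst). apply H3. eapply ctx_sub_closed_inst; eauto.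
Qed.

Lemma open_v_ren G D t (v w : val) f : OV G t v w -> ctx_ren G D f ->
  OV D t (ren_v f v) (ren_v f w).
Proof.
  intros H Hf. rewrite !(proj1 ren_as_subst). apply open_v_subst with (G := G); auto.
  intros i u Hi. constructor. auto.
Qed.

Lemma open_c_ren G D t (m n : com) f : OC G t m n -> ctx_ren G D f ->
  OC D t (ren_c f m) (ren_c f n).
Proof.
  intros H Hf. rewrite !(proj2 ren_as_subst). apply open_c_subst with (G := G); auto.
  intros i u Hi. constructor. auto.
Qed.

Lemma open_v_nil t (v w : val) : OV [] t v w <-> BV t v w.
Proof.
  split.
  - intros [_ [_ H]]. specialize (H _ closed_inst_nil). rewrite !(proj1 subst_id) in H. exact H.
  - intros H. destruct (bisim_v_typed _ _ _ H) as [T1 T2]. split; [|split]; auto.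
    intros g _. rewrite (closed_subst_v _ _ _ T1), (closed_subst_v _ _ _ T2). exact H.
Qed.

Lemma open_c_nil t (m n : com) : OC [] t m n <-> BC t m n.
Proof.
  split.
  - intros [_ [_ H]]. specialize (H _ closed_inst_nil). rewrite !(proj2 subst_id) in H. exact H.
  - intros H. destruct (bisim_c_typed _ _ _ H) as [T1 T2]. split; [|split]; auto.
    intros g _. rewrite (closed_subst_c _ _ _ T1), (closed_subst_c _ _ _ T2). exact H.
Qed.

(** * Howe's closure *)

(* A compatible refinement of open bisimilarity, composed on the right with it. *)
Inductive howe_v : ctx -> ty -> val -> val -> Prop :=
| hv_var G i t W : nth_error G i = Some t -> OV G t (VVar Sg i) W -> howe_v G t (VVar Sg i) W
| hv_unit G W : OV G One (VUnit Sg) W -> howe_v G One (VUnit Sg) W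
| hv_zero G W : OV G Nat (VZ Sg) W -> howe_v G Nat (VZ Sg) W
| hv_succ G v v' W : howe_v G Nat v v' -> OV G Nat (VS v') W -> howe_v G Nat (VS v) W
| hv_lam G t t' m m' W : howe_c (t :: G) t' m m' -> OV G (Arr t t') (VLam t m') W ->
    howe_v G (Arr t t') (VLam t m) W
with howe_c : ctx -> ty -> com -> com -> Prop :=
| hc_app G t t' v v' w w' N : howe_v G (Arr t t') v v' -> howe_v G t w w' ->
    OC G t' (CApp v' w') N -> howe_c G t' (CApp v w) N
| hc_ret G t v v' N : howe_v G t v v' -> OC G t (CRet v') N -> howe_c G t (CRet v) N
| hc_let G t t' m m' n n' N : howe_c G t m m' -> howe_c (t :: G) t' n n' ->
    OC G t' (CLet m' n') N -> howe_c G t' (CLet m n) N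
| hc_fix G r t v v' N : howe_v G (Arr (Arr r t) (Arr r t)) v v' ->
    OC G (Arr r t) (CFix v') N -> howe_c G (Arr r t) (CFix v) N
| hc_case G t v v' m m' n n' N : howe_v G Nat v v' -> howe_c G t m m' ->
    howe_c (Nat :: G) t n n' -> OC G t (CCase v' m' n') N -> howe_c G t (CCase v m n) N
| hc_opF G t (s : Sg) n ms ms' N : arity_of s = AFin n -> length ms = n -> length ms' = n ->
    (forall i, i < n -> howe_c G t (nth i ms dflt) (nth i ms' dflt)) ->
    OC G t (COpF s ms') N -> howe_c G t (COpF s ms) N
| hc_opPF G t (s : Sg) n v v' ms ms' N : arity_of s = APFin n -> howe_v G Nat v v' ->
    length ms = n -> length ms' = n ->
    (forall i, i < n -> howe_c G t (nth i ms dflt) (nth i ms' dflt)) ->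
    OC G t (COpPF s v' ms') N -> howe_c G t (COpPF s v ms) N
| hc_opI G t (s : Sg) v v' N : arity_of s = AInf -> howe_v G (Arr Nat t) v v' ->
    OC G t (COpI s v') N -> howe_c G t (COpI s v) N
| hc_opPI G t (s : Sg) v v' w w' N : arity_of s = APInf -> howe_v G Nat v v' ->
    howe_v G (Arr Nat t) w w' -> OC G t (COpPI s v' w') N -> howe_c G t (COpPI s v w) N.

Scheme howe_v_min := Minimality for howe_v Sort Prop
with howe_c_min := Minimality for howe_c Sort Prop.
Combined Scheme howe_ind from howe_v_min, howe_c_min.

Local Notation HV := howe_v.
Local Notation HC := howe_c.

Lemma howe_typed :
  (forall G t v w, HV G t v w -> tv G v t /\ tv G w t) /\
  (forall G t m n, HC G t m n -> tc G m t /\ tc G n t).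
Proof.
  apply howe_ind; intros;
    repeat match goal with
           | HH : open_v _ _ _ _ _ |- _ => destruct HH as [? [? ?]]
           | HH : open_c _ _ _ _ _ |- _ => destruct HH as [? [? ?]]
           | HH : _ /\ _ |- _ => destruct HH
           end;
    split; auto; econstructor; eauto.
  all: subst; apply (nth_forall_In _ _ dflt); intros i Hi;
    match goal with HH : forall i, i < _ -> tc _ _ _ /\ _ |- _ => apply HH, Hi end.
Qed.

Lemma howe_v_typed {G t v w} : HV G t v w -> tv G v t /\ tv G w t.
Proof. apply howe_typed. Qed.

Lemma howe_c_typed {G t m n} : HC G t m n -> tc G m t /\ tc G n t.
Proof. apply howe_typed. Qed.

Lemma howe_v_open_trans G t (v u w : val) : HV G t v u -> OV G t u w -> HV G t v w.
Proof. intros H1 H2. destruct H1; econstructor; eauto using open_v_trans. Qed.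

Lemma howe_c_open_trans G t (m u n : com) : HC G t m u -> OC G t u n -> HC G t m n.
Proof. intros H1 H2. destruct H1; econstructor; eauto using open_c_trans. Qed.

Lemma howe_refl :
  (forall G (v : val) t, tv G v t -> HV G t v v) /\
  (forall G (m : com) t, tc G m t -> HC G t m m).
Proof.
  apply typing_ind; intros; econstructor; eauto;
    try (apply open_v_refl; econstructor; eauto; fail);
    try (apply open_c_refl; econstructor; eauto; fail).
  all: try (intros i Hi; match goal with HH : forall m, In m _ -> HC _ _ m m |- _ =>
              apply HH, nth_In; lia end).
  all: apply open_c_refl; econstructor; eauto.
Qed.

Lemma open_v_howe G t (v w : val) : OV G t v w -> HV G t v w.
Proof. intros H. eapply howe_v_open_trans; [|exact H]. apply howe_refl, H. Qed.

Lemma open_c_howe G t (m n : com) : OC G t m n -> HC G t m n.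
Proof. intros H. eapply howe_c_open_trans; [|exact H]. apply howe_refl, H. Qed.

Local Ltac howe_compat :=
  econstructor; eauto;
  first [apply open_v_refl | apply open_c_refl];
  repeat match goal with
         | H : HV _ _ _ _ |- _ => destruct (howe_v_typed H); clear H
         | H : HC _ _ _ _ |- _ => destruct (howe_c_typed H); clear H
         end;
  econstructor; eauto.

Lemma howe_succ G v v' : HV G Nat v v' -> HV G Nat (VS v) (VS v').
Proof. intros. howe_compat. Qed.

Lemma howe_lam G t t' m m' : HC (t :: G) t' m m' -> HV G (Arr t t') (VLam t m) (VLam t m').
Proof. intros. howe_compat. Qed.

Lemma howe_app G t t' v v' w w' : HV G (Arr t t') v v' -> HV G t w w' ->
  HC G t' (CApp v w) (CApp v' w').
Proof. intros. howe_compat. Qed.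

Lemma howe_ret G t v v' : HV G t v v' -> HC G t (CRet v) (CRet v').
Proof. intros. howe_compat. Qed.

Lemma howe_let G t t' m m' n n' : HC G t m m' -> HC (t :: G) t' n n' ->
  HC G t' (CLet m n) (CLet m' n').
Proof. intros. howe_compat. Qed.

Lemma howe_fix G r t v v' : HV G (Arr (Arr r t) (Arr r t)) v v' ->
  HC G (Arr r t) (CFix v) (CFix v').
Proof. intros. howe_compat. Qed.

Lemma howe_case G t v v' m m' n n' : HV G Nat v v' -> HC G t m m' -> HC (Nat :: G) t n n' ->
  HC G t (CCase v m n) (CCase v' m' n').
Proof. intros. howe_compat. Qed.

Lemma howe_opI G t (s : Sg) v v' : arity_of s = AInf -> HV G (Arr Nat t) v v' ->
  HC G t (COpI s v) (COpI s v').
Proof. intros. howe_compat. Qed.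

Lemma howe_opPI G t (s : Sg) v v' w w' : arity_of s = APInf -> HV G Nat v v' ->
  HV G (Arr Nat t) w w' -> HC G t (COpPI s v w) (COpPI s v' w').
Proof. intros. howe_compat. Qed.

Lemma howe_opF G t (s : Sg) n ms ms' : arity_of s = AFin n -> length ms = n -> length ms' = n ->
  (forall i, i < n -> HC G t (nth i ms dflt) (nth i ms' dflt)) ->
  HC G t (COpF s ms) (COpF s ms').
Proof.
  intros E L1 L2 H. econstructor; eauto. apply open_c_refl. econstructor; eauto.
  apply (nth_forall_In _ _ dflt). intros i Hi. apply (howe_c_typed (H i ltac:(lia))).
Qed.

Lemma howe_opPF G t (s : Sg) n v v' ms ms' : arity_of s = APFin n -> HV G Nat v v' ->
  length ms = n -> length ms' = n ->
  (forall i, i < n -> HC G t (nth i ms dflt) (nth i ms' dflt)) ->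
  HC G t (COpPF s v ms) (COpPF s v' ms').
Proof.
  intros E Hv L1 L2 H. econstructor; eauto. apply open_c_refl. econstructor; eauto.
  - apply (howe_v_typed Hv).
  - apply (nth_forall_In _ _ dflt). intros i Hi. apply (howe_c_typed (H i ltac:(lia))).
Qed.

Lemma howe_ren :
  (forall G t v w, HV G t v w -> forall D f, ctx_ren G D f -> HV D t (ren_v f v) (ren_v f w)) /\
  (forall G t m n, HC G t m n -> forall D f, ctx_ren G D f -> HC D t (ren_c f m) (ren_c f n)).
Proof.
  apply howe_ind; intros; simpl;
    lazymatch goal with
    | _ : OC _ _ (COpF _ ?l) _, Hf : ctx_ren _ _ ?f |- _ =>
        eapply hc_opF with (ms' := map (ren_c f) l)
    | _ : OC _ _ (COpPF _ _ ?l) _, Hf : ctx_ren _ _ ?f |- _ =>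
        eapply hc_opPF with (ms' := map (ren_c f) l)
    | _ => econstructor
    end;
    eauto using ctx_ren_up; try (rewrite length_map; eassumption);
    try (intros i Hi; rewrite !(nth_map_fixed _ _ dflt dflt) by reflexivity; eauto);
    match goal with
    | HH : open_v _ _ _ _ _, Hf : ctx_ren _ _ _ |- _ => exact (open_v_ren _ _ _ _ _ _ HH Hf)
    | HH : open_c _ _ _ _ _, Hf : ctx_ren _ _ _ |- _ => exact (open_c_ren _ _ _ _ _ _ HH Hf)
    end.
Qed.

Definition howe_sub G D (g g' : nat -> val) :=
  forall i u, nth_error G i = Some u -> HV D u (g i) (g' i).

Lemma howe_sub_up G D g g' t : howe_sub G D g g' -> howe_sub (t :: G) (t :: D) (ups g) (ups g').
Proof.
  intros H [|i] u E; simpl in *.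
  - injection E as <-. apply howe_refl. constructor. reflexivity.
  - apply (proj1 howe_ren _ _ _ _ (H _ _ E)). intros j w Ej. exact Ej.
Qed.

Lemma howe_sub_typed G D g g' : howe_sub G D g g' -> ctx_sub G D g'.
Proof. intros H i u E. apply (howe_v_typed (H _ _ E)). Qed.

Lemma howe_subst :
  (forall G t v w, HV G t v w -> forall D g g', howe_sub G D g g' ->
     HV D t (subst_v g v) (subst_v g' w)) /\
  (forall G t m n, HC G t m n -> forall D g g', howe_sub G D g g' ->
     HC D t (subst_c g m) (subst_c g' n)).
Proof.
  apply howe_ind; intros; simpl;
    lazymatch goal with
    | H : nth_error _ _ = Some _, Hg : howe_sub _ _ _ _ |- _ =>
        eapply howe_v_open_trans; [apply Hg, H|]
    | _ : OC _ _ (COpF _ ?l) _, Hg : howe_sub _ _ _ ?g' |- _ =>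
        eapply hc_opF with (ms' := map (subst_c g') l)
    | _ : OC _ _ (COpPF _ _ ?l) _, Hg : howe_sub _ _ _ ?g' |- _ =>
        eapply hc_opPF with (ms' := map (subst_c g') l)
    | _ => econstructor
    end;
    eauto using howe_sub_up; try (rewrite length_map; eassumption);
    try (intros i Hi; rewrite !(nth_map_fixed _ _ dflt dflt) by reflexivity; eauto);
    match goal with
    | HH : open_v _ _ _ _ _, Hg : howe_sub _ _ _ _ |- _ =>
        exact (open_v_subst _ _ _ _ _ _ HH (howe_sub_typed _ _ _ _ Hg))
    | HH : open_c _ _ _ _ _, Hg : howe_sub _ _ _ _ |- _ =>
        exact (open_c_subst _ _ _ _ _ _ HH (howe_sub_typed _ _ _ _ Hg))
    end.
Qed.

Lemma howe_subst1 t t' (b b' : com) (w w' : val) :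
  HC [t] t' b b' -> HV [] t w w' -> HC [] t' (subst1 b w) (subst1 b' w').
Proof.
  intros Hb Hw. apply (proj2 howe_subst _ _ _ _ Hb).
  intros [|[|i]] u E; simpl in *; try discriminate. injection E as <-. exact Hw.
Qed.

Lemma howe_nat v w : HV [] Nat v w -> v = w.
Proof.
  enough (H : forall G t v w, HV G t v w -> G = [] -> t = Nat -> v = w) by eauto.
  clear v w.
  apply (howe_v_min (fun G t v w => G = [] -> t = Nat -> v = w) (fun _ _ _ _ => True)).
  all: try (intros; exact I).
  - intros G [|i] t W E _ -> _; discriminate.
  - intros G W _ _ E; discriminate.
  - intros G W Hov -> _. apply bisim_nat, open_v_nil, Hov.
  - intros G u u' W _ IH Hov -> _. rewrite IH by reflexivity. apply bisim_nat, open_v_nil, Hov.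
  - intros G t t' m m' W _ _ _ _ E; discriminate.
Qed.

Lemma lift_howe_bisim t a (M N : com) :
  lift (HV [] t) a (optree M) -> BC t M N -> lift (HV [] t) a (optree N).
Proof.
  intros H1 H2. eapply lift_mono; [|exact (lift_comp _ _ _ _ _ H1 (bisim_c_lift _ _ _ H2))].
  intros x z [y [Hxy Hyz]]. eapply howe_v_open_trans; [exact Hxy|]. apply open_v_nil, Hyz.
Qed.

Definition approx_sim n : Prop :=
  forall t M N, HC [] t M N -> lift (HV [] t) (approx n ([], M)) (optree N).

Section ApproxSimStep.
Variable n : nat.
Hypothesis IH : approx_sim n.

Lemma approx_sim_app t t' v v' w w' : HV [] (Arr t t') v v' -> HV [] t w w' ->
  lift (HV [] t') (approx (S n) ([], CApp v w)) (optree (CApp v' w')).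
Proof.
  intros Hv Hw.
  destruct v as [| | |t0 b|]; try (rewrite approx_S_stuck by reflexivity; apply lift_bot).
  inversion Hv as [| | | |G' t2 t2' m m' W Hb Hov]; subst.
  rewrite (approx_S_step n _ ([], subst1 b w)) by reflexivity.
  assert (Hbeta : optree (CApp (VLam t0 m') w') = optree (subst1 m' w'))
    by (apply optree_step; reflexivity).
  pose proof (IH _ _ _ (howe_subst1 _ _ _ _ _ _ Hb Hw)) as Hred. rewrite <- Hbeta in Hred.
  apply (lift_howe_bisim _ _ _ _ Hred). eapply bisim_app; [apply open_v_nil, Hov|].
  apply (howe_v_typed Hw).
Qed.

Lemma approx_sim_ret t v v' : HV [] t v v' ->
  lift (HV [] t) (approx (S n) ([], CRet v)) (optree (CRet v')).
Proof.
  intros Hv. unfold optree.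
  rewrite approx_S_terminal, optree_terminal, !shape_ret by reflexivity.
  apply lift_trel with (Q := HV [] t); auto. constructor; auto.
Qed.

Lemma approx_sim_let t t' m m' k k' : HC [] t m m' -> HC [t] t' k k' ->
  lift (HV [] t') (approx (S n) ([], CLet m k)) (optree (CLet m' k')).
Proof.
  intros Hm Hk. unfold optree.
  rewrite (approx_S_step n _ ([k], m)), (optree_step _ ([k'], m')) by reflexivity.
  eapply lift_tle_l; [apply (approx_app n n [] [k] m); auto|].
  eapply lift_tle_l; [apply bind_mono; [apply tle_refl | intros; apply approx_ret_le]|].
  eapply lift_tle_r; [apply (optree_bind [] [k'] m')|].
  eapply bind_lift; [apply (IH _ _ _ Hm)|].
  intros x y Hxy. rewrite (optree_step _ ([], subst1 k' y)) by reflexivity.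
  apply IH. eapply howe_subst1; eauto.
Qed.

(* [fix(V)] unfolds to [V (\x. let fix(V) => y in y x)], both sides in lockstep. *)
Lemma approx_sim_fix r t v v' : HV [] (Arr (Arr r t) (Arr r t)) v v' ->
  lift (HV [] (Arr r t)) (approx (S n) ([], CFix v)) (optree (CFix v')).
Proof.
  intros Hv. destruct (howe_v_typed Hv) as [Tv Tv'].
  destruct (canon_arr _ _ _ Tv) as [b ->]. destruct (canon_arr _ _ _ Tv') as [b' ->].
  set (U := fun (x : val) => VLam r (CLet (CFix (ren_v S x)) (CApp (VVar Sg 0) (VVar Sg 1)))).
  unfold optree.
  rewrite (approx_S_step n _ ([], CApp (VLam (Arr r t) b) (U (VLam (Arr r t) b)))),
    (optree_step _ ([], CApp (VLam (Arr r t) b') (U (VLam (Arr r t) b')))) by reflexivity.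
  apply IH. eapply howe_app; [exact Hv|].
  apply howe_lam. eapply howe_let.
  - apply howe_fix. apply (proj1 howe_ren _ _ _ _ Hv). intros [|i] u Hi; discriminate.
  - apply howe_refl. econstructor; constructor; reflexivity.
Qed.

Lemma approx_sim_case t v m m' k k' : tv [] v Nat -> HC [] t m m' -> HC [Nat] t k k' ->
  lift (HV [] t) (approx (S n) ([], CCase v m k)) (optree (CCase v m' k')).
Proof.
  intros Tv Hm Hk. unfold optree.
  destruct v; try (rewrite approx_S_stuck by reflexivity; apply lift_bot).
  - rewrite (approx_S_step n _ ([], m)), (optree_step _ ([], m')) by reflexivity. apply IH, Hm.
  - rewrite (approx_S_step n _ ([], subst1 k v)), (optree_step _ ([], subst1 k' v))
      by reflexivity.
    apply IH. eapply howe_subst1; eauto. apply howe_refl. inversion Tv; auto.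
Qed.

Lemma approx_sim_opF t (s : Sg) k ms ms' : arity_of s = AFin k ->
  (forall i, i < k -> HC [] t (nth i ms dflt) (nth i ms' dflt)) ->
  lift (HV [] t) (approx (S n) ([], COpF s ms)) (optree (COpF s ms')).
Proof.
  intros Ea Hms. unfold optree.
  rewrite approx_S_terminal, optree_terminal, !shape_opF by reflexivity.
  destruct (node_opF_cases s eq_refl) as [E|[k' [p [idx [Ea' [Hidx E]]]]]].
  - rewrite E. apply lift_bot.
  - rewrite !E. apply node_lift. intros i. apply IH, Hms.
    rewrite Ea in Ea'. injection Ea' as <-. apply Hidx.
Qed.

Lemma approx_sim_opPF t (s : Sg) k v ms ms' : arity_of s = APFin k ->
  (forall i, i < k -> HC [] t (nth i ms dflt) (nth i ms' dflt)) ->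
  lift (HV [] t) (approx (S n) ([], COpPF s v ms)) (optree (COpPF s v ms')).
Proof.
  intros Ea Hms. unfold optree.
  rewrite approx_S_terminal, optree_terminal, !shape_opPF by reflexivity.
  destruct (num_of v) as [pv|]; [|apply lift_bot].
  destruct (node_opPF_cases s pv eq_refl) as [E|[k' [p [idx [Ea' [Hidx E]]]]]].
  - rewrite E. apply lift_bot.
  - rewrite !E. apply node_lift. intros i. apply IH, Hms.
    rewrite Ea in Ea'. injection Ea' as <-. apply Hidx.
Qed.

Lemma approx_sim_opI t (s : Sg) v v' : HV [] (Arr Nat t) v v' ->
  lift (HV [] t) (approx (S n) ([], COpI s v)) (optree (COpI s v')).
Proof.
  intros Hv. unfold optree.
  rewrite approx_S_terminal, optree_terminal, !shape_opI by reflexivity.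
  destruct (node_opI_cases s eq_refl) as [E|[p [idx [Ea' E]]]].
  - rewrite E. apply lift_bot.
  - rewrite !E. apply node_lift. intros i. apply IH.
    eapply howe_app; [exact Hv|]. apply howe_refl, numeral_typed.
Qed.

Lemma approx_sim_opPI t (s : Sg) v w w' : HV [] (Arr Nat t) w w' ->
  lift (HV [] t) (approx (S n) ([], COpPI s v w)) (optree (COpPI s v w')).
Proof.
  intros Hw. unfold optree.
  rewrite approx_S_terminal, optree_terminal, !shape_opPI by reflexivity.
  destruct (num_of v) as [pv|]; [|apply lift_bot].
  destruct (node_opPI_cases s pv eq_refl) as [E|[p [idx [Ea' E]]]].
  - rewrite E. apply lift_bot.
  - rewrite !E. apply node_lift. intros i. apply IH.
    eapply howe_app; [exact Hw|]. apply howe_refl, numeral_typed.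
Qed.

End ApproxSimStep.

Lemma approx_sim_all n : approx_sim n.
Proof.
  induction n as [|n IH]; intros t0 M0 N0 H; [apply lift_bot|].
  remember (@nil ty) as G0 eqn:EG.
  destruct H as [G t t' v v' w w' N Hv Hw HB | G t v v' N Hv HB | G t t' m m' k k' N Hm Hk HB
     | G r t v v' N Hv HB | G t v v' m m' k k' N Hv Hm Hk HB | G t s l ms ms' N Ea L1 L2 Hms HB
     | G t s l v v' ms ms' N Ea Hv L1 L2 Hms HB | G t s v v' N Ea Hv HB
     | G t s v v' w w' N Ea Hv Hw HB]; subst G;
    eapply lift_howe_bisim; try (apply open_c_nil, HB);
    try (pose proof (howe_nat _ _ Hv) as <-).
  - eapply approx_sim_app; eauto.
  - apply approx_sim_ret; auto.
  - eapply approx_sim_let; eauto.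
  - apply approx_sim_fix; auto.
  - apply approx_sim_case; auto. apply (howe_v_typed Hv).
  - eapply approx_sim_opF; eauto.
  - eapply approx_sim_opPF; eauto.
  - apply approx_sim_opI; auto.
  - apply approx_sim_opPI; auto.
Qed.

(* Scott-openness reduces an observation of [optree M] to one of a finite approximation. *)
Lemma howe_c_lift t (M N : com) : HC [] t M N -> lift (HV [] t) (optree M) (optree N).
Proof.
  intros H A o HM. unfold omod, optree in *.
  destruct (proj2 (scott o) (fun k => restrict A (approx k ([], M))))
    with (t := restrict A (optree_cfg ([], M))) as [k Hk]; auto.
  - intros k. apply tle_restrict, approx_le_S.
  - split.
    + intros k. apply tle_restrict, approx_le_optree.
    + intros u Hu. apply approx_sup, Hu.
  - exact (approx_sim_all k _ _ _ H A o Hk).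
Qed.

Local Notation PV G t := (clos_trans val (HV G t)).
Local Notation PC G t := (clos_trans com (HC G t)).

Lemma pv_typed G t (v w : val) : PV G t v w -> tv G v t /\ tv G w t.
Proof. apply (clos_trans_ends _ (fun x => tv G x t)). intros a b; apply howe_v_typed. Qed.

Lemma pc_typed G t (m n : com) : PC G t m n -> tc G m t /\ tc G n t.
Proof. apply (clos_trans_ends _ (fun x => tc G x t)). intros a b; apply howe_c_typed. Qed.

Lemma pv_succ G v v' : PV G Nat v v' -> PV G Nat (VS v) (VS v').
Proof. apply clos_trans_map, howe_succ. Qed.

Lemma pv_lam G t t' m m' : PC (t :: G) t' m m' -> PV G (Arr t t') (VLam t m) (VLam t m').
Proof. apply clos_trans_map, howe_lam. Qed.

Lemma pc_ret G t v v' : PV G t v v' -> PC G t (CRet v) (CRet v').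
Proof. apply clos_trans_map, howe_ret. Qed.

Lemma pc_fix G r t v v' : PV G (Arr (Arr r t) (Arr r t)) v v' ->
  PC G (Arr r t) (CFix v) (CFix v').
Proof. apply clos_trans_map, howe_fix. Qed.

Lemma pc_opI G t s v v' : arity_of s = AInf -> PV G (Arr Nat t) v v' ->
  PC G t (COpI s v) (COpI s v').
Proof. intros E. apply clos_trans_map. intros; apply howe_opI; auto. Qed.

Lemma pc_app G t t' v v' w w' : PV G (Arr t t') v v' -> PV G t w w' ->
  PC G t' (CApp v w) (CApp v' w').
Proof.
  intros H1 H2. destruct (pv_typed _ _ _ _ H1), (pv_typed _ _ _ _ H2).
  refine (clos_trans_cong2 (@CApp Sg) _ _ H1 H2); intros; eapply howe_app; eauto; apply howe_refl; auto.
Qed.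

Lemma pc_let G t t' m m' n n' : PC G t m m' -> PC (t :: G) t' n n' ->
  PC G t' (CLet m n) (CLet m' n').
Proof.
  intros H1 H2. destruct (pc_typed _ _ _ _ H1), (pc_typed _ _ _ _ H2).
  refine (clos_trans_cong2 (@CLet Sg) _ _ H1 H2); intros; eapply howe_let; eauto; apply howe_refl; auto.
Qed.

Lemma pc_opPI G t s v v' w w' : arity_of s = APInf -> PV G Nat v v' -> PV G (Arr Nat t) w w' ->
  PC G t (COpPI s v w) (COpPI s v' w').
Proof.
  intros E H1 H2. destruct (pv_typed _ _ _ _ H1), (pv_typed _ _ _ _ H2).
  refine (clos_trans_cong2 (@COpPI Sg s) _ _ H1 H2); intros;
    eapply howe_opPI; eauto; apply howe_refl; auto.
Qed.

Lemma pc_case G t v v' m m' n n' : PV G Nat v v' -> PC G t m m' -> PC (Nat :: G) t n n' ->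
  PC G t (CCase v m n) (CCase v' m' n').
Proof.
  intros H1 H2 H3. destruct (pv_typed _ _ _ _ H1), (pc_typed _ _ _ _ H2), (pc_typed _ _ _ _ H3).
  apply t_trans with (CCase v' m n).
  - refine (clos_trans_map (fun x => CCase x m n) _ H1).
    intros; apply howe_case; auto; apply howe_refl; auto.
  - refine (clos_trans_cong2 (@CCase Sg v') _ _ H2 H3);
      intros; apply howe_case; auto; apply howe_refl; auto.
Qed.

Definition howe_list G t n (l l' : list com) : Prop :=
  length l = n /\ length l' = n /\ forall i, i < n -> HC G t (nth i l dflt) (nth i l' dflt).

Lemma pc_list G t n ms ms' : length ms = n -> length ms' = n ->
  (forall i, i < n -> PC G t (nth i ms dflt) (nth i ms' dflt)) ->
  clos_trans (list com) (howe_list G t n) ms ms'.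
Proof.
  intros L1 L2 H.
  assert (HF : Forall2 (PC G t) ms ms').
  { apply (Forall2_nth_iff _ _ _ dflt dflt). split; [lia | intros i Hi; apply H; lia]. }
  assert (Hty : forall l, length l = n -> (forall i, i < n -> tc G (nth i l dflt) t) ->
                  Forall (fun x => tc G x t) l).
  { intros l Hl Hi. apply Forall_forall, (nth_forall_In _ _ dflt). intros i ?. apply Hi. lia. }
  pose proof (clos_trans_Forall2 (HC G t) (fun x => tc G x t) ms ms'
                (fun x Hx => proj2 howe_refl _ _ _ Hx)
                (Hty _ L1 (fun i Hi => proj1 (pc_typed _ _ _ _ (H i Hi))))
                (Hty _ L2 (fun i Hi => proj2 (pc_typed _ _ _ _ (H i Hi)))) HF) as Hch.
  destruct (clos_trans_invariant _ (fun l => length l = n) _ _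
              (fun a b Hab Ha => eq_trans (eq_sym (Forall2_length Hab)) Ha) L1 Hch) as [Hch' _].
  refine (clos_trans_map (fun l => l) _ Hch'). intros l l' [Hll' Hl].
  apply (Forall2_nth_iff _ _ _ dflt dflt) in Hll' as [Hlen Hnth].
  split; [|split]; [lia | lia | intros i Hi; apply Hnth; lia].
Qed.

Lemma pc_opF G t s n ms ms' : arity_of s = AFin n -> length ms = n -> length ms' = n ->
  (forall i, i < n -> PC G t (nth i ms dflt) (nth i ms' dflt)) ->
  PC G t (COpF s ms) (COpF s ms').
Proof.
  intros E L1 L2 H. refine (clos_trans_map (COpF s) _ (pc_list _ _ _ _ _ L1 L2 H)).
  intros l l' [M1 [M2 M3]]. eapply howe_opF; eauto.
Qed.

Lemma pc_opPF G t s n v v' ms ms' : arity_of s = APFin n -> PV G Nat v v' ->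
  length ms = n -> length ms' = n ->
  (forall i, i < n -> PC G t (nth i ms dflt) (nth i ms' dflt)) ->
  PC G t (COpPF s v ms) (COpPF s v' ms').
Proof.
  intros E Hv L1 L2 H. destruct (pv_typed _ _ _ _ Hv) as [_ Tv'].
  apply t_trans with (COpPF s v' ms).
  - refine (clos_trans_map (fun x => COpPF s x ms) _ Hv). intros x y Hxy.
    eapply howe_opPF; eauto. intros i Hi. apply howe_refl, (pc_typed _ _ _ _ (H i Hi)).
  - refine (clos_trans_map (COpPF s v') _ (pc_list _ _ _ _ _ L1 L2 H)).
    intros l l' [M1 [M2 M3]]. eapply howe_opPF; eauto. apply howe_refl, Tv'.
Qed.

Lemma howe_sym :
  (forall G t v w, HV G t v w -> PV G t w v) /\ (forall G t m n, HC G t m n -> PC G t n m).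
Proof.
  apply howe_ind; intros;
    repeat match goal with
           | HH : open_v _ _ _ _ _ |- _ => apply open_v_sym, open_v_howe, t_step in HH
           | HH : open_c _ _ _ _ _ |- _ => apply open_c_sym, open_c_howe, t_step in HH
           end;
    try assumption; (eapply t_trans; [eassumption|]).
  - apply pv_succ; auto.
  - apply pv_lam; auto.
  - eapply pc_app; eauto.
  - apply pc_ret; auto.
  - eapply pc_let; eauto.
  - apply pc_fix; auto.
  - apply pc_case; auto.
  - eapply pc_opF; eauto.
  - eapply pc_opPF; eauto.
  - apply pc_opI; auto.
  - apply pc_opPI; auto.
Qed.

Lemma howe_closed_bisim :
  (forall t v w, HV [] t v w -> BV t v w) /\ (forall t m n, HC [] t m n -> BC t m n).
Proof.
  destruct (bisim_coind (fun t => PV [] t) (fun t => PC [] t)) as [Hv Hc].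
  - split; [|split; [|split; [|split]]].
    + intros t v w H. apply pv_typed; auto.
    + intros t m n H. apply pc_typed; auto.
    + intros v w H. induction H as [v w H|u v w _ IH1 _ IH2]; [apply howe_nat, H | congruence].
    + intros t m n H. induction H as [m n H|m n k _ IH1 _ IH2].
      * eapply lift_mono; [|apply howe_c_lift, H]. intros; apply t_step; auto.
      * eapply lift_mono; [|exact (lift_comp _ _ _ _ _ IH1 IH2)].
        intros a c [b [Hab Hbc]]. eapply t_trans; eauto.
    + intros t' t v w H u Hu. refine (clos_trans_map (fun x => CApp x u) _ H).
      intros; eapply howe_app; eauto. apply howe_refl, Hu.
  - split; intros t a b; apply clos_trans_sym, howe_sym.
  - split; intros; [apply Hv | apply Hc]; apply t_step; auto.
Qed.

Lemma howe_v_open G t (v w : val) : HV G t v w -> OV G t v w.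
Proof.
  intros H. destruct (howe_v_typed H). split; [|split]; auto. intros g Hg.
  apply howe_closed_bisim, (proj1 howe_subst _ _ _ _ H).
  intros i u E. apply howe_refl, Hg, E.
Qed.

Lemma howe_c_open G t (m n : com) : HC G t m n -> OC G t m n.
Proof.
  intros H. destruct (howe_c_typed H). split; [|split]; auto. intros g Hg.
  apply howe_closed_bisim, (proj2 howe_subst _ _ _ _ H).
  intros i u E. apply howe_refl, Hg, E.
Qed.

Lemma open_bisim_compatible : compatible OV OC.
Proof.
  split; [|split; [|split; [|split; [|split; [|split; [|split;
    [|split; [|split; [|split; [|split; [|split; [|split]]]]]]]]]]]].
  - intros G i t E. apply open_v_refl. constructor; auto.
  - intros G. apply open_v_refl. constructor.
  - intros G. apply open_v_refl. constructor.
  - intros G v w H. apply howe_v_open, howe_succ, open_v_howe, H.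
  - intros G t t' m n H. apply howe_v_open, howe_lam, open_c_howe, H.
  - intros. apply howe_c_open. eapply howe_app; apply open_v_howe; eauto.
  - intros. apply howe_c_open, howe_ret, open_v_howe. auto.
  - intros. apply howe_c_open. eapply howe_let; apply open_c_howe; eauto.
  - intros. apply howe_c_open, howe_fix, open_v_howe. auto.
  - intros. apply howe_c_open. apply howe_case; auto using open_v_howe, open_c_howe.
  - intros G t s n ms ms' E L H. apply howe_c_open.
    apply (Forall2_nth_iff _ _ _ dflt dflt) in H as [L' H].
    eapply howe_opF; eauto; try lia. intros i Hi. apply open_c_howe, H. lia.
  - intros G t s n v w ms ms' E Hv L H. apply howe_c_open.
    apply (Forall2_nth_iff _ _ _ dflt dflt) in H as [L' H].
    eapply howe_opPF; eauto using open_v_howe; try lia. intros i Hi. apply open_c_howe, H. lia.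
  - intros. apply howe_c_open, howe_opI, open_v_howe; auto.
  - intros. apply howe_c_open, howe_opPI; auto using open_v_howe.
Qed.

End Bisimilarity.

Theorem theorem3 (Sg : signature) (O : Type) (osem : O -> tree Sg unit -> Prop) :
  (forall o : O, @scott_open Sg (osem o)) ->
  @decomposable Sg O osem ->
  @compatible Sg (@open_v Sg (@bisim_v Sg O osem)) (@open_c Sg (@bisim_c Sg O osem)).
Proof. exact (@open_bisim_compatible Sg O osem). Qed.
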